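(* Let $N\ge 1$, $m\ge 2$, and consider $N$ agents with states $x_i(t)\in\mathbb{R}^m$ obeying $\dot x_i(t)=Ax_i(t)+Bu_i(t)$, $i=1,\dots,N$, where $A$ and $B$ are the $m$-th order integrator matrices (see context). Let $\mathcal{G}_{\sigma(t)}$ be a switching family of weighted digraphs on $N$ nodes satisfying the dwell-time assumption, and apply the protocol $$u_i(t)=K_1x_i(t)-\sum_{j\in\mathcal{N}_i(\sigma(t))}\alpha^{ij}_{\sigma(t)}K_2\big(x_i(t)-x_j(t)\big),$$ with $K_1=(0,-a_1,-a_2,\dots,-a_{m-1})\in\mathbb{R}^{1\times m}$ and $K_2=(a_1,a_2,\dots,a_{m-1},1)\in\mathbb{R}^{1\times m}$, where $a_1,\dots,a_{m-1}\in\mathbb{R}$. Suppose all roots of $s^{m-1}+a_{m-1}s^{m-2}+\cdots+a_2s+a_1=0$ have strictly negative real part and $\mathcal{G}_{\sigma(t)}$ is uniformly jointly quasi-strongly connected. Then for every initial condition $x_1(0),\dots,x_N(0)$ there exists $\bar{x}^*\in\mathbb{R}$ such that $\lim_{t\to\infty}x_i(t)=(\bar x^*/a_1,0,\dots,0)^T$ for all $i=1,\dots,N$; in particular the multi-agent system reaches consensus.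
   Context: $A=\begin{pmatrix}0_{m-1}& I_{m-1}\\ 0 & 0_{m-1}^T\end{pmatrix}\in\mathbb{R}^{m\times m}$ (ones on the superdiagonal, zeros elsewhere) and $B=(0,\dots,0,1)^T\in\mathbb{R}^m$, so that $\dot x_{i,1}=x_{i,2},\dots,\dot x_{i,m-1}=x_{i,m},\dot x_{i,m}=u_i$. Graphs: nodes $v_1,\dots,v_N$ (node $v_i$ is agent $i$); an edge $e_{ij}$ from $v_j$ to $v_i$ means agent $i$ receives information from agent $j$; no self-edges. $\mathcal{S}$ is a finite index set of such digraphs; each graph $\mathcal{G}_k$, $k\in\mathcal{S}$, carries fixed weights $\alpha^{ij}_k>0$ for each edge $e_{ij}$ of $\mathcal{G}_k$ (and $\alpha^{ij}_k=0$ if $e_{ij}$ is not an edge). $\mathcal{N}_i(k)=\{j: e_{ij}\in\mathcal{G}_k\}$. $\sigma:[0,\infty)\to\mathcal{S}$ is piecewise constant; dwell-time assumption: the switching instants $t_0<t_1<\cdots$ satisfy $t_{i+1}-t_i\ge\tau_D$ for a constant $\tau_D>0$. A directed path is a sequence of distinct nodes $v_{i_1},\dots,v_{i_p}$ with $e_{i_{s+1}i_s}$ an edge for each $s$. A digraph is quasi-strongly connected if it has a node (root) from which there is a directed path to every other node. The union graph over $[t_1,t_2)$ has node set $\{v_1,\dots,v_N\}$ and edge set $\bigcup_{t\in[t_1,t_2)}\mathcal{E}(\mathcal{G}_{\sigma(t)})$. $\mathcal{G}_{\sigma(t)}$ is uniformly jointly quasi-strongly connected if there is $T>0$ such that the union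 graph over $[t,t+T)$ is quasi-strongly connected for every $t\ge 0$. The system reaches consensus if there exists $x^*\in\mathbb{R}^m$ with $\lim_{t\to\infty}x_i(t)=x^*$ for all $i$. *)

From Stdlib Require Import Reals Lra Lia List.
Import ListNotations.
Open Scope R_scope.

Fixpoint rsum (n : nat) (f : nat -> R) : R :=
  match n with
  | O => 0
  | S k => rsum k f + f k
  end.

(** Minimal complex arithmetic on pairs (re, im). *)
Definition cadd (z w : R * R) : R * R := (fst z + fst w, snd z + snd w).
Definition cmul (z w : R * R) : R * R :=
  (fst z * fst w - snd z * snd w, fst z * snd w + snd z * fst w).
Definition cofr (r : R) : R * R := (r, 0).
Fixpoint cpow (z : R * R) (n : nat) : R * R :=
  match n with
  | O => (1, 0)
  | S k => cmul z (cpow z k)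
  end.

(** Value at complex s of  s^(m-1) + a_(m-1) s^(m-2) + ... + a_2 s + a_1
    (coefficients a 1, ..., a (m-1); a k multiplies s^(k-1)). *)
Definition charpoly (m : nat) (a : nat -> R) (s : R * R) : R * R :=
  cadd (cpow s (m - 1))
       (fold_right cadd (0, 0)
          (map (fun k => cmul (cofr (a k)) (cpow s (k - 1))) (seq 1 (m - 1)))).

Definition hurwitz (m : nat) (a : nat -> R) : Prop :=
  forall s : R * R, charpoly m a s = (0, 0) -> fst s < 0.

(** Gains, components indexed 0..m-1 (component c is x_{i,c+1} of the paper).
    K1 = (0, -a_1, ..., -a_(m-1)),  K2 = (a_1, ..., a_(m-1), 1). *)
Definition K1 (a : nat -> R) (c : nat) : R :=
  match c with O => 0 | _ => - a c end.
Definition K2 (m : nat) (a : nat -> R) (c : nat) : R :=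
  if Nat.eqb c (m - 1) then 1 else a (S c).

(** Protocol:  u_i(t) = K1 x_i(t) - sum_j alpha^{ij}_{sigma(t)} K2 (x_i(t) - x_j(t)).
    x i t c = component c of agent i's state at time t; alpha k i j = weight of
    edge e_ij (from v_j to v_i) in graph k (0 if not an edge). *)
Definition protocol (N m : nat) (a : nat -> R) (alpha : nat -> nat -> nat -> R)
  (sigma : R -> nat) (x : nat -> R -> nat -> R) (i : nat) (t : R) : R :=
  rsum m (fun c => K1 a c * x i t c)
  - rsum N (fun j => alpha (sigma t) i j *
                     rsum m (fun c => K2 m a c * (x i t c - x j t c))).

Definition union_edge (alpha : nat -> nat -> nat -> R) (sigma : R -> nat)
  (t1 t2 : R) (i j : nat) : Prop :=
  exists s, t1 <= s < t2 /\ alpha (sigma s) i j > 0.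

(** [chain E p]: for consecutive nodes v_a, v_b of p, e_{ba} is an edge
    (E b a means: edge from v_a to v_b). *)
Fixpoint chain (E : nat -> nat -> Prop) (p : list nat) : Prop :=
  match p with
  | a :: ((b :: _) as rest) => E b a /\ chain E rest
  | _ => True
  end.

Definition dpath (N : nat) (E : nat -> nat -> Prop) (r v : nat) : Prop :=
  exists p : list nat,
    NoDup p /\ Forall (fun k => (k < N)%nat) p /\
    head p = Some r /\ last p r = v /\ chain E p.

Definition quasi_strongly_connected (N : nat) (E : nat -> nat -> Prop) : Prop :=
  exists r, (r < N)%nat /\ forall v, (v < N)%nat -> dpath N E r v.

Definition ujqsc (N : nat) (alpha : nat -> nat -> nat -> R) (sigma : R -> nat) : Prop :=
  exists T, T > 0 /\
    forall t, t >= 0 -> quasi_strongly_connected N (union_edge alpha sigma t (t + T)).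

Definition dwell_switching (sigma : R -> nat) (ts : nat -> R) (tauD : R) : Prop :=
  tauD > 0 /\ ts O = 0 /\
  (forall n, ts n + tauD <= ts (S n)) /\
  (forall n t, ts n <= t < ts (S n) -> sigma t = sigma (ts n)).

Definition cv_infty_to (f : R -> R) (L : R) : Prop :=
  forall eps, eps > 0 -> exists T, forall t, t >= T -> Rabs (f t - L) < eps.

(* Put z_i = K2 x_i = a_1 x_{i,1} + ... + a_{m-1} x_{i,m-1} + x_{i,m}.
   Since K1 cancels the integrator chain, the protocol turns z into the
   first-order consensus system  z_i' = sum_j alpha^{ij}_{sigma(t)} (z_j - z_i).

   Part I shows that such a system reaches consensus when the graphs are
   uniformly jointly quasi-strongly connected: a max/min principle keeps the
   values in their initial range, decay and growth estimates show that a lead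
   of the root over the extreme value spreads along the edges of each union
   graph, and a counting argument gives a contraction of the spread by a fixed
   factor over every window of fixed length.  Hence all z_i tend to one z*.

   Part II is agent-wise.  x_{i,1}, ..., x_{i,m} is an integrator chain whose
   K2-combination tends to z*.  Factor s^{m-1} + ... + a_1 = prod_k (s - lambda_k)
   over C (MathComp's algebraic closure of R[i]); the signals
   U_k = prod_{l<k} (d/dt - lambda_l) x_{i,1} satisfy U_k' = lambda_k U_k + U_{k+1}
   and U_{m-1} = z_i.  A stable first-order equation with convergent input
   converges, so convergence travels down from U_{m-1} to U_0, and then up the
   chain to every x_{i,c}.  A convergent function with convergent derivative
   has derivative limit 0, which gives x_{i,c} -> 0 for c >= 2 and
   a_1 x_{i,1} -> z*, i.e. the limit (z* / a_1, 0, ..., 0). *)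

From Pilot Require Import Defs.
From Stdlib Require Import Reals List Lra Lia ZArith Classical.
From HB Require structures.
From mathcomp Require all_boot all_order all_algebra.
From mathcomp Require Rstruct complex.
Open Scope R_scope.

(** * Switching instants and piecewise differentiable functions *)

Definition dwell_times (ts : nat -> R) (tauD : R) : Prop :=
  tauD > 0 /\ ts O = 0 /\ (forall n, ts n + tauD <= ts (S n)).

(* [t] lies strictly inside a switching interval, where the dynamics is smooth. *)
Definition on_piece (ts : nat -> R) (t : R) : Prop := exists n, ts n < t < ts (S n).

Lemma nat_unbounded x : exists n, x < INR n.
Proof.
  destruct (archimed x) as [Ha _].
  destruct (Rle_or_lt (IZR (up x)) 0) as [Hle|Hlt].
  - exists O; simpl; lra.
  - exists (Z.to_nat (up x)). rewrite INR_IZR_INZ, Z2Nat.id; [lra|]. apply le_IZR. lra.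
Qed.

Section DwellTimes.
Variables (ts : nat -> R) (tauD : R).
Hypothesis Hd : dwell_times ts tauD.

Lemma dwell_times_linear n : INR n * tauD <= ts n.
Proof.
  destruct Hd as [_ [H0 Hs]]; induction n as [|n IH].
  - rewrite H0; simpl; lra.
  - rewrite S_INR. specialize (Hs n). lra.
Qed.

Lemma dwell_times_unbounded s : exists n, s < ts n.
Proof.
  destruct Hd as [Ht _]. destruct (nat_unbounded (s / tauD)) as [n Hn].
  exists n. pose proof (dwell_times_linear n).
  apply Rmult_lt_compat_r with (r := tauD) in Hn; [|lra].
  unfold Rdiv in Hn. rewrite Rmult_assoc, Rinv_l in Hn; lra.
Qed.

Lemma dwell_times_locate s : 0 <= s -> exists n, ts n <= s < ts (S n).
Proof.
  intros Hs. destruct (dwell_times_unbounded s) as [k Hk].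
  induction k as [|k IH].
  - destruct Hd as [_ [H0 _]]. lra.
  - destruct (Rlt_or_le s (ts k)) as [Hl|Hl]; [apply IH; exact Hl|]. exists k; lra.
Qed.

Lemma dwell_times_locate_left s : 0 < s -> exists n, ts n < s <= ts (S n).
Proof.
  intros Hs. destruct (dwell_times_locate s) as [n Hn]; [lra|].
  destruct (Rlt_or_le (ts n) s) as [Hl|Hl]; [exists n; lra|].
  destruct n as [|n]; [destruct Hd as [_ [H0 _]]; lra|].
  exists n. destruct Hd as [Ht [_ Hsn]]. specialize (Hsn n). lra.
Qed.

End DwellTimes.

Lemma mean_value (f f' : R -> R) (a b : R) : a < b ->
  (forall c, a < c < b -> derivable_pt_lim f c (f' c)) ->
  (forall c, a <= c <= b -> continuity_pt f c) ->
  exists c, a < c < b /\ f b - f a = f' c * (b - a).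
Proof.
  intros Hab Hd Hc.
  assert (pr1 : forall c, a < c < b -> derivable_pt f c) by (intros c Hc'; exists (f' c); apply Hd; exact Hc').
  assert (pr2 : forall c, a < c < b -> derivable_pt id c) by (intros c _; apply derivable_pt_id).
  destruct (MVT f id a b pr1 pr2 Hab Hc (fun c _ => derivable_continuous_pt _ _ (derivable_pt_id c)))
    as [c [P HP]].
  exists c; split; [exact P|].
  rewrite (derive_pt_eq_0 _ _ _ (pr1 c P) (Hd c P)) in HP.
  rewrite (derive_pt_eq_0 _ _ _ (pr2 c P) (derivable_pt_lim_id c)) in HP.
  unfold id in HP. lra.
Qed.

(* A continuous function whose derivative is nonnegative on every open
   switching interval of [lo, hi], 0 <= lo, is nondecreasing on [lo, hi]: apply the mean
   value theorem on each interval and chain across the switching instants. *)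
Lemma piecewise_nondecreasing ts tauD (f f' : R -> R) lo hi :
  dwell_times ts tauD -> 0 <= lo ->
  (forall t, lo <= t <= hi -> continuity_pt f t) ->
  (forall t, on_piece ts t -> lo < t < hi -> derivable_pt_lim f t (f' t)) ->
  (forall t, on_piece ts t -> lo < t < hi -> 0 <= f' t) ->
  forall a b, lo <= a -> a <= b -> b <= hi -> f a <= f b.
Proof.
  intros Hd Hlo Hc Hder Hpos.
  assert (Hpiece : forall n a b, ts n <= a -> a <= b -> b <= ts (S n) -> lo <= a -> b <= hi -> f a <= f b).
  { intros n a b H1 H2 H3 H4 H5. destruct (Req_dec a b) as [E|E]; [subst; lra|].
    destruct (mean_value f f' a b) as [c [Hc1 Hc2]]; [lra| | |].
    - intros c Hc'. apply Hder; [exists n; lra| lra].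
    - intros c Hc'. apply Hc; lra.
    - assert (0 <= f' c) by (apply Hpos; [exists n; lra| lra]).
      assert (0 <= f' c * (b - a)) by (apply Rmult_le_pos; lra). lra. }
  assert (Hupto : forall k a b, lo <= a -> a <= b -> b <= hi -> b <= ts k -> f a <= f b).
  { induction k as [|k IH]; intros a b H1 H2 H3 H4.
    - destruct Hd as [_ [H0 _]]. assert (a = b) by lra. subst; lra.
    - destruct (Rle_or_lt b (ts k)) as [Hb|Hb]; [apply IH; lra|].
      destruct (Rle_or_lt (ts k) a) as [Ha|Ha]; [apply (Hpiece k); lra|].
      apply Rle_trans with (f (ts k)); [apply IH; lra| apply (Hpiece k); lra]. }
  intros a b H1 H2 H3. destruct (dwell_times_unbounded ts tauD Hd b) as [k Hk'].
  apply (Hupto k); lra.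
Qed.

Lemma rsum_ext n f g : (forall i, (i < n)%nat -> f i = g i) -> rsum n f = rsum n g.
Proof. induction n; intros H; simpl; [reflexivity|]. rewrite IHn, H; [reflexivity|lia|intros; apply H; lia]. Qed.

Lemma rsum_le n f g : (forall i, (i < n)%nat -> f i <= g i) -> rsum n f <= rsum n g.
Proof.
  induction n; intros H; simpl; [lra|].
  pose proof (H n (Nat.lt_succ_diag_r n)).
  assert (rsum n f <= rsum n g) by (apply IHn; intros; apply H; lia). lra.
Qed.

Lemma rsum_plus n f g : rsum n (fun i => f i + g i) = rsum n f + rsum n g.
Proof. induction n; simpl; [ring|]. rewrite IHn; ring. Qed.

Lemma rsum_scal n c f : rsum n (fun i => c * f i) = c * rsum n f.
Proof. induction n; simpl; [ring|]. rewrite IHn; ring. Qed.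

Lemma rsum_opp n f : rsum n (fun i => - f i) = - rsum n f.
Proof. induction n; simpl; [ring|]. rewrite IHn; ring. Qed.

Lemma rsum_const n c : rsum n (fun _ => c) = INR n * c.
Proof. induction n; simpl rsum; [simpl; ring|]. rewrite IHn, S_INR; ring. Qed.

Lemma rsum_shift n f : rsum (S n) f = f O + rsum n (fun c => f (S c)).
Proof. induction n; simpl in *; [ring|]. rewrite IHn. ring. Qed.

Lemma rsum_nonneg n f : (forall i, (i < n)%nat -> 0 <= f i) -> 0 <= rsum n f.
Proof. intros H. rewrite <- (Rmult_0_r (INR n)), <- rsum_const. apply rsum_le; exact H. Qed.

Lemma rsum_ge_term n f j : (forall i, (i < n)%nat -> 0 <= f i) -> (j < n)%nat -> f j <= rsum n f.
Proof.
  induction n; intros H Hj; [lia|]. simpl.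
  pose proof (H n (Nat.lt_succ_diag_r n)).
  destruct (Nat.eq_dec j n) as [->|Hne].
  - assert (0 <= rsum n f) by (apply rsum_nonneg; intros; apply H; lia). lra.
  - assert (f j <= rsum n f) by (apply IHn; [intros; apply H; lia| lia]). lra.
Qed.

Lemma rsum_deriv n (F F' : nat -> R -> R) t :
  (forall i, (i < n)%nat -> derivable_pt_lim (F i) t (F' i t)) ->
  derivable_pt_lim (fun s => rsum n (fun i => F i s)) t (rsum n (fun i => F' i t)).
Proof.
  induction n; intros H; simpl; [apply derivable_pt_lim_const|].
  apply (derivable_pt_lim_plus (fun s => rsum n (fun i => F i s)) (F n)); [apply IHn; intros|]; apply H; lia.
Qed.

Lemma rsum_cont n (F : nat -> R -> R) t :
  (forall i, (i < n)%nat -> continuity_pt (F i) t) ->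
  continuity_pt (fun s => rsum n (fun i => F i s)) t.
Proof.
  induction n; intros H; simpl; [apply continuity_pt_const; intros a b; reflexivity|].
  apply (continuity_pt_plus (fun s => rsum n (fun i => F i s)) (F n)); [apply IHn; intros|]; apply H; lia.
Qed.

Lemma cont_const c t : continuity_pt (fun _ => c) t.
Proof. apply continuity_pt_const; intros a b; reflexivity. Qed.

Lemma cont_affine a b t : continuity_pt (fun u => a * u + b) t.
Proof.
  apply continuity_pt_plus; [|apply cont_const].
  apply continuity_pt_mult; [apply cont_const| apply derivable_continuous_pt, derivable_pt_id].
Qed.

Lemma dlim_scal c f l t : derivable_pt_lim f t l -> derivable_pt_lim (fun u => c * f u) t (c * l).
Proof. exact (derivable_pt_lim_scal f c t l). Qed.

Lemma dlim_linear c t : derivable_pt_lim (fun u => c * u) t c.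
Proof. pose proof (dlim_scal c (fun u => u) 1 t (derivable_pt_lim_id t)) as H; rewrite Rmult_1_r in H; exact H. Qed.

Lemma dlim_affine a b t : derivable_pt_lim (fun u => a * u + b) t a.
Proof.
  pose proof (derivable_pt_lim_plus (fun u => a * u) (fun _ => b) t a 0 (dlim_linear a t)
    (derivable_pt_lim_const b t)) as H.
  rewrite Rplus_0_r in H. exact H.
Qed.

Lemma expw_deriv K (f : R -> R) f't t : derivable_pt_lim f t f't ->
  derivable_pt_lim (fun u => exp (K * u) * f u) t (exp (K * t) * (f't + K * f t)).
Proof.
  intros Hf.
  assert (He : derivable_pt_lim (fun u => exp (K * u)) t (K * exp (K * t))).
  { pose proof (derivable_pt_lim_comp (fun u => K * u) exp t K (exp (K * t)) (dlim_linear K t)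
      (derivable_pt_lim_exp _)) as H.
    unfold comp in H. rewrite Rmult_comm. exact H. }
  pose proof (derivable_pt_lim_mult _ _ _ _ _ He Hf) as H. unfold mult_fct in H.
  replace (exp (K * t) * (f't + K * f t)) with (K * exp (K * t) * f t + exp (K * t) * f't) by ring.
  exact H.
Qed.

Lemma expw_cont K (f : R -> R) t : continuity_pt f t -> continuity_pt (fun u => exp (K * u) * f u) t.
Proof.
  intros Hf. apply (continuity_pt_mult (fun u => exp (K * u)) f); [|exact Hf].
  apply (continuity_pt_comp (fun u => K * u) exp).
  - apply continuity_pt_mult; [apply cont_const| apply derivable_continuous_pt, derivable_pt_id].
  - apply derivable_continuous_pt, derivable_pt_exp.
Qed.

Lemma exp_le x y : x <= y -> exp x <= exp y.
Proof. intros H. destruct (Rle_lt_or_eq_dec x y H) as [H'|H']; [left; apply exp_increasing; exact H'| rewrite H'; lra]. Qed.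

Lemma exp_shift K s t : exp (- K * (t - s)) = exp (K * s) * exp (- (K * t)).
Proof. rewrite <- exp_plus. f_equal. ring. Qed.

Lemma exp_weight_cancel K s t A B : exp (K * s) * A <= exp (K * t) * B -> exp (- K * (t - s)) * A <= B.
Proof.
  intros H. rewrite exp_shift.
  replace B with (exp (- (K * t)) * (exp (K * t) * B))
    by (rewrite <- Rmult_assoc, <- exp_plus; replace (- (K * t) + K * t) with 0 by ring; rewrite exp_0; ring).
  rewrite (Rmult_comm (exp (K * s))), Rmult_assoc. apply Rmult_le_compat_l; [left; apply exp_pos| exact H].
Qed.

(** * A barrier argument for piecewise differentiable functions *)

Lemma cont_eps f t0 : continuity_pt f t0 -> forall eps, 0 < eps ->
  exists eta, 0 < eta /\ forall u, Rabs (u - t0) < eta -> Rabs (f u - f t0) < eps.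
Proof.
  intros Hc eps He. destruct (Hc eps He) as [al [Hal H]].
  exists al; split; [lra|]. intros u Hu.
  destruct (Req_dec u t0) as [E|E]; [subst; rewrite Rminus_diag, Rabs_R0; lra|].
  apply (H u). split; [split; [exact I| auto]| exact Hu].
Qed.

Lemma neg_near N (g : nat -> R -> R) t0 :
  (forall i, (i < N)%nat -> continuity_pt (g i) t0) ->
  (forall i, (i < N)%nat -> g i t0 < 0) ->
  exists eta, 0 < eta /\ forall u, Rabs (u - t0) < eta -> forall i, (i < N)%nat -> g i u < 0.
Proof.
  induction N as [|N IH]; intros Hc Hn; [exists 1; split; [lra| intros; lia]|].
  destruct IH as [e1 [He1 H1]]; [intros; apply Hc; lia| intros; apply Hn; lia|].
  pose proof (Hn N (Nat.lt_succ_diag_r N)) as HN.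
  destruct (cont_eps (g N) t0 (Hc N (Nat.lt_succ_diag_r N)) (- g N t0)) as [e2 [He2 H2]]; [lra|].
  exists (Rmin e1 e2); split; [apply Rmin_pos; lra|].
  pose proof (Rmin_l e1 e2). pose proof (Rmin_r e1 e2).
  intros u Hu i Hi. destruct (Nat.eq_dec i N) as [->|Hne].
  - specialize (H2 u ltac:(lra)). apply Rabs_def2 in H2. lra.
  - apply H1; [lra| lia].
Qed.

Lemma first_exit N (g : nat -> R -> R) t0 t1 i1 :
  (forall i t, (i < N)%nat -> continuity_pt (g i) t) ->
  (forall i, (i < N)%nat -> g i t0 < 0) ->
  t0 <= t1 -> (i1 < N)%nat -> 0 <= g i1 t1 ->
  exists s j, t0 < s <= t1 /\ (j < N)%nat /\ 0 <= g j s /\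
    forall v, t0 <= v < s -> forall k, (k < N)%nat -> g k v < 0.
Proof.
  intros Hc H0 Ht1 Hi1 Hbad.
  set (E := fun u => t0 <= u <= t1 /\ forall v, t0 <= v <= u -> forall j, (j < N)%nat -> g j v < 0).
  assert (HE0 : E t0).
  { split; [lra|]. intros v Hv j Hj. replace v with t0 by lra. apply H0; exact Hj. }
  destruct (completeness E (ex_intro _ t1 (fun u Hu => proj2 (proj1 Hu))) (ex_intro _ t0 HE0))
    as [s [Hub Hlub]].
  assert (Hst0 : t0 <= s) by (apply Hub; exact HE0).
  assert (Hst1 : s <= t1) by (apply Hlub; intros u [Hu _]; lra).
  assert (Hbelow : forall v, t0 <= v < s -> forall j, (j < N)%nat -> g j v < 0).
  { intros v Hv j Hj. destruct (Rlt_dec (g j v) 0) as [Hl|Hl]; [exact Hl|exfalso].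
    assert (s <= v); [|lra]. apply Hlub. intros u [Hu1 Hu2].
    destruct (Rle_or_lt u v) as [Huv|Huv]; [exact Huv|].
    exfalso. apply Hl. apply Hu2; [lra| exact Hj]. }
  assert (Hat : exists j, (j < N)%nat /\ 0 <= g j s).
  { apply NNPP. intros Hx.
    assert (Hall : forall j, (j < N)%nat -> g j s < 0).
    { intros j Hj. apply Rnot_le_lt. intros Hle. apply Hx. exists j; split; assumption. }
    destruct (neg_near N g s (fun i Hi => Hc i s Hi) Hall) as [eta [Heta Hn]].
    set (u := Rmin (s + eta / 2) t1).
    assert (Hu : E u).
    { pose proof (Rmin_l (s + eta / 2) t1). pose proof (Rmin_r (s + eta / 2) t1).
      split; [split; [apply Rmin_glb; lra| exact H1]|].
      intros v Hv j Hj. destruct (Rlt_or_le v s) as [Hvs|Hvs]; [apply Hbelow; [lra| exact Hj]|].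
      apply Hn; [rewrite Rabs_right; unfold u in Hv; lra| exact Hj]. }
    specialize (Hub u Hu). unfold u in Hub.
    destruct (Rle_dec (s + eta / 2) t1) as [Hm|Hm];
      [rewrite Rmin_left in Hub by lra; lra| rewrite Rmin_right in Hub by lra].
    assert (s = t1) by lra. subst s. specialize (Hall i1 Hi1). lra. }
  destruct Hat as [j [Hj Hgj]]. exists s, j.
  split; [|split; [exact Hj| split; [exact Hgj| exact Hbelow]]].
  destruct (Rle_lt_or_eq_dec t0 s Hst0) as [Hl|Hl]; [lra|].
  subst s. specialize (H0 j Hj). lra.
Qed.

(* At a
   first exit time s the derivative of the exiting g_j would be <= -eps/2 just
   before s, contradicting the mean value theorem. *)
Lemma barrier ts tauD N (g dg : nat -> R -> R) t0 eps K :
  dwell_times ts tauD -> 0 <= t0 -> 0 < eps -> 0 <= K ->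
  (forall i t, (i < N)%nat -> continuity_pt (g i) t) ->
  (forall i, (i < N)%nat -> g i t0 < 0) ->
  (forall i t, (i < N)%nat -> on_piece ts t -> derivable_pt_lim (g i) t (dg i t)) ->
  (forall i t, (i < N)%nat -> on_piece ts t -> t0 < t ->
      (forall j, (j < N)%nat -> g j t <= 0) -> dg i t <= - eps + K * Rabs (g i t)) ->
  forall t, t0 <= t -> forall i, (i < N)%nat -> g i t < 0.
Proof.
  intros Hd Ht0 He HK Hc H0 Hder Hdg t1 Ht1 i1 Hi1.
  apply Rnot_le_lt. intros Hbad.
  destruct (first_exit N g t0 t1 i1 Hc H0 Ht1 Hi1 Hbad) as [s [j [Hs [Hj [Hgj Hbelow]]]]].
  destruct (dwell_times_locate_left ts tauD Hd s) as [n Hn]; [lra|].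
  set (ep := eps / (2 * (K + 1))).
  assert (Hep : 0 < ep) by (unfold ep; apply Rdiv_lt_0_compat; lra).
  destruct (cont_eps (g j) s (Hc j s Hj) ep Hep) as [eta [Heta Hgc]].
  (* a point u0 < s, close to s, in the same switching interval and after t0 *)
  set (lo := Rmax (Rmax (ts n) t0) (s - eta / 2)).
  assert (Hlo : lo < s /\ ts n <= lo /\ t0 <= lo /\ s - eta / 2 <= lo).
  { unfold lo. pose proof (Rmax_l (Rmax (ts n) t0) (s - eta / 2)).
    pose proof (Rmax_r (Rmax (ts n) t0) (s - eta / 2)).
    pose proof (Rmax_l (ts n) t0). pose proof (Rmax_r (ts n) t0).
    split; [apply Rmax_lub_lt; [apply Rmax_lub_lt|]; lra| lra]. }
  set (u0 := (lo + s) / 2).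
  destruct (mean_value (g j) (dg j) u0 s) as [c [Hcc Hmvt]]; unfold u0 in *.
  - lra.
  - intros c Hcc. apply Hder; [exact Hj| exists n; lra].
  - intros c _. apply Hc; exact Hj.
  - assert (Hgc0 : g j c < 0) by (apply Hbelow; [lra| exact Hj]).
    assert (Habs : Rabs (g j c) < ep).
    { assert (Rabs (c - s) < eta) by (rewrite Rabs_left; lra).
      specialize (Hgc c H). apply Rabs_def2 in Hgc. rewrite Rabs_left; lra. }
    assert (Hdgc : dg j c <= - eps + K * Rabs (g j c)).
    { apply Hdg; [exact Hj| exists n; lra| lra|]. intros k Hk. left. apply Hbelow; [lra| exact Hk]. }
    assert (HKep : K * Rabs (g j c) <= eps / 2).
    { apply Rle_trans with (K * ep); [apply Rmult_le_compat_l; lra|].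
      apply Rle_trans with ((K + 1) * ep); [apply Rmult_le_compat_r; lra|].
      right. unfold ep. field. lra. }
    assert (0 < (- dg j c) * (s - (lo + s) / 2)) by (apply Rmult_lt_0_compat; lra).
    assert (g j ((lo + s) / 2) < 0) by (apply Hbelow; [lra| exact Hj]).
    lra.
Qed.

(** * First-order consensus dynamics: invariance of the range *)

Definition consensus_solution ts N (w : R -> nat -> nat -> R) (z : nat -> R -> R) : Prop :=
  (forall i t, (i < N)%nat -> continuity_pt (z i) t) /\
  (forall i t, (i < N)%nat -> on_piece ts t ->
     derivable_pt_lim (z i) t (rsum N (fun j => w t i j * (z j t - z i t)))).

Definition weights_bounded N (w : R -> nat -> nat -> R) W : Prop :=
  forall t i j, (i < N)%nat -> (j < N)%nat -> 0 <= w t i j <= W.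

Lemma consensus_affine ts N w z (s b : R) : consensus_solution ts N w z ->
  consensus_solution ts N w (fun i t => s * z i t + b).
Proof.
  intros [Hc Hd]. split.
  - intros i t Hi. apply continuity_pt_plus; [|apply cont_const].
    apply continuity_pt_mult; [apply cont_const| apply Hc; exact Hi].
  - intros i t Hi Hp.
    replace (rsum N (fun j => w t i j * (s * z j t + b - (s * z i t + b))))
      with (s * rsum N (fun j => w t i j * (z j t - z i t)) + 0).
    + apply (derivable_pt_lim_plus (fun u => s * z i u) (fun _ => b));
        [apply dlim_scal, Hd; assumption| apply derivable_pt_lim_const].
    + rewrite Rplus_0_r, <- rsum_scal. apply rsum_ext. intros; ring.
Qed.

Lemma drift_upper N w W t k (z : nat -> R) b : weights_bounded N w W -> (k < N)%nat ->
  0 <= b -> (forall j, (j < N)%nat -> z j - z k <= b) ->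
  rsum N (fun j => w t k j * (z j - z k)) <= INR N * W * b.
Proof.
  intros Hw Hk Hb Hz.
  apply Rle_trans with (rsum N (fun _ => W * b)); [|rewrite rsum_const; right; ring].
  apply rsum_le. intros j Hj. destruct (Hw t k j Hk Hj).
  apply Rle_trans with (w t k j * b); [apply Rmult_le_compat_l; auto| apply Rmult_le_compat_r; lra].
Qed.

Lemma drift_lower N w W (z : nat -> R) t i j : weights_bounded N w W -> (i < N)%nat -> (j < N)%nat ->
  (forall k, (k < N)%nat -> 0 <= z k) ->
  w t i j * z j <= rsum N (fun k => w t i k * (z k - z i)) + INR N * W * z i.
Proof.
  intros Hw Hi Hj Hz.
  rewrite (rsum_ext N (fun k => w t i k * (z k - z i)) (fun k => w t i k * z k + (- z i) * w t i k))
    by (intros; ring).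
  rewrite rsum_plus, rsum_scal.
  assert (H1 : w t i j * z j <= rsum N (fun k => w t i k * z k)).
  { apply (rsum_ge_term N (fun k => w t i k * z k)); [|exact Hj].
    intros k Hk. apply Rmult_le_pos; [apply Hw; assumption| apply Hz; exact Hk]. }
  assert (H2 : rsum N (fun k => w t i k) <= INR N * W).
  { rewrite <- rsum_const. apply rsum_le; intros; apply Hw; lia. }
  assert (z i * rsum N (fun k => w t i k) <= z i * (INR N * W))
    by (apply Rmult_le_compat_l; [apply Hz; exact Hi| exact H2]).
  change (rsum N (w t i)) with (rsum N (fun k => w t i k)). lra.
Qed.

Section Range.
Variables (ts : nat -> R) (tauD : R) (N : nat) (w : R -> nat -> nat -> R) (W : R).
Hypotheses (Hd : dwell_times ts tauD) (Hw : weights_bounded N w W).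

(* Maximum principle: an upper bound of all z_i at t0 persists for t >= t0.
   Apply the barrier to z_i - M - eps (1 + (t - t0)) for a small eps > 0. *)
Lemma max_principle z : consensus_solution ts N w z ->
  forall t0 M, 0 <= t0 -> (forall i, (i < N)%nat -> z i t0 <= M) ->
  forall t, t0 <= t -> forall i, (i < N)%nat -> z i t <= M.
Proof.
  intros [Hc Hz] t0 M Ht0 HM t Ht i Hi.
  apply Rnot_lt_le. intros Hbad.
  set (eps := (z i t - M) / (2 * (1 + (t - t0)))).
  assert (Heps : 0 < eps) by (unfold eps; apply Rdiv_lt_0_compat; lra).
  assert (HK : 0 <= INR N * W)
    by (apply Rmult_le_pos; [apply pos_INR| destruct (Hw 0 i i Hi Hi); lra]).
  set (b := eps * t0 - M - eps).
  assert (Hg : z i t + (- eps * t + b) < 0).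
  { apply (barrier ts tauD N (fun k u => z k u + (- eps * u + b))
      (fun k u => rsum N (fun j => w u k j * (z j u - z k u)) + - eps) t0 eps (INR N * W) Hd Ht0 Heps HK);
      [ | | | | exact Ht| exact Hi].
    - intros k u Hk. apply continuity_pt_plus; [apply Hc; exact Hk| apply cont_affine].
    - intros k Hk. specialize (HM k Hk). unfold b. lra.
    - intros k u Hk Hp. apply (derivable_pt_lim_plus (z k)); [apply Hz; assumption| apply dlim_affine].
    - intros k u Hk Hp _ Hall.
      assert (Hgk : z k u + (- eps * u + b) <= 0) by (apply Hall; exact Hk).
      rewrite Rabs_left1 by exact Hgk.
      assert (rsum N (fun j => w u k j * (z j u - z k u)) <= INR N * W * - (z k u + (- eps * u + b))); [|lra].
      apply (drift_upper N w W u k (fun j => z j u)); [exact Hw| exact Hk| lra|].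
      intros j Hj. specialize (Hall j Hj). cbv beta in Hall. lra. }
  assert (eps * (1 + (t - t0)) = (z i t - M) / 2) by (unfold eps; field; lra).
  unfold b in Hg. lra.
Qed.

(* Minimum principle, by the maximum principle applied to -z. *)
Lemma min_principle z : consensus_solution ts N w z ->
  forall t0 m, 0 <= t0 -> (forall i, (i < N)%nat -> m <= z i t0) ->
  forall t, t0 <= t -> forall i, (i < N)%nat -> m <= z i t.
Proof.
  intros Hz t0 m Ht0 Hm t Ht i Hi.
  assert (-1 * z i t + 0 <= - m); [|lra].
  apply (max_principle _ (consensus_affine ts N w z (-1) 0 Hz) t0 (- m) Ht0); [|exact Ht| exact Hi].
  intros k Hk. specialize (Hm k Hk). lra.
Qed.

End Range.

(** * First-order consensus dynamics: decay, growth and spreading of a lead *)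

Definition weights_lower N (w : R -> nat -> nat -> R) delta : Prop :=
  forall t i j, (i < N)%nat -> (j < N)%nat -> 0 < w t i j -> delta <= w t i j.

(* Every s >= 0 lies in a window [a, a + tau] within tau of s on which the
   weights are constant (a consequence of the dwell time). *)
Definition weights_dwell (w : R -> nat -> nat -> R) tau : Prop :=
  forall s, 0 <= s -> exists a, s - tau <= a <= s /\ forall u i j, a <= u <= a + tau -> w u i j = w s i j.

(* Factor by which a nonnegative lead survives one window of length T + 2 tau. *)
Definition window_factor N W delta tau T : R :=
  exp (-3 * (INR N * W) * (T + 2 * tau)) * Rmin 1 (delta * tau).

Lemma window_factor_bounds N W delta tau T : 0 <= W -> 0 < delta -> 0 < tau -> 0 < T ->
  0 < window_factor N W delta tau T <= 1.
Proof.
  intros HW Hdel Htau HT. unfold window_factor.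
  assert (exp (-3 * (INR N * W) * (T + 2 * tau)) <= 1).
  { rewrite <- exp_0. apply exp_le.
    assert (0 <= INR N * W * (T + 2 * tau)) by (apply Rmult_le_pos; [apply Rmult_le_pos; [apply pos_INR| lra]| lra]).
    lra. }
  pose proof (exp_pos (-3 * (INR N * W) * (T + 2 * tau))). pose proof (Rmin_l 1 (delta * tau)).
  assert (0 < Rmin 1 (delta * tau)) by (apply Rmin_glb_lt; [lra| apply Rmult_lt_0_compat; lra]).
  split; [apply Rmult_lt_0_compat; lra|].
  apply Rle_trans with (1 * 1); [apply Rmult_le_compat; lra| lra].
Qed.

Section Lead.
Variables (ts : nat -> R) (tauD : R) (N : nat) (w : R -> nat -> nat -> R) (W : R).
Variables (y : nat -> R -> R) (t0 : R).
Hypotheses (Hd : dwell_times ts tauD) (Hw : weights_bounded N w W)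
  (Hy : consensus_solution ts N w y) (Ht0 : 0 <= t0)
  (Hnn : forall t i, t0 <= t -> (i < N)%nat -> 0 <= y i t).

Let K := INR N * W.

(* The rate K = N W, which bounds the total incoming weight of an agent, is nonnegative. *)
Lemma K_nonneg : (0 < N)%nat -> 0 <= K.
Proof. intros HN. unfold K. apply Rmult_le_pos; [apply pos_INR|]. destruct (Hw 0 O O HN HN); lra. Qed.

(* A nonnegative solution decays at most exponentially:  y_i(t) >= e^{-K(t-s)} y_i(s),
   because e^{Kt} y_i(t) is nondecreasing. *)
Lemma decay i s t : (i < N)%nat -> t0 <= s -> s <= t -> exp (- K * (t - s)) * y i s <= y i t.
Proof.
  intros Hi Hs Hst. destruct Hy as [Hc Hder]. apply exp_weight_cancel.
  apply (piecewise_nondecreasing ts tauD (fun u => exp (K * u) * y i u)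
    (fun u => exp (K * u) * (rsum N (fun j => w u i j * (y j u - y i u)) + K * y i u)) s t Hd); try lra.
  - intros u _. apply expw_cont, Hc; exact Hi.
  - intros u Hp _. apply expw_deriv, Hder; assumption.
  - intros u Hp Hu. apply Rmult_le_pos; [left; apply exp_pos|].
    assert (0 <= w u i i * y i u) by (apply Rmult_le_pos; [apply Hw; assumption| apply Hnn; [lra| exact Hi]]).
    assert (w u i i * y i u <= rsum N (fun j => w u i j * (y j u - y i u)) + K * y i u); [|lra].
    apply (drift_lower N w W (fun j => y j u) u i i Hw Hi Hi). intros j Hj; apply Hnn; [lra| exact Hj].
Qed.

Lemma growth i j a tau delta c : (i < N)%nat -> (j < N)%nat -> t0 <= a -> 0 < tau -> 0 <= delta -> 0 <= c ->
  (forall u, a < u < a + tau -> delta <= w u i j) ->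
  (forall u, a <= u <= a + tau -> c <= y j u) ->
  exp (- K * tau) * (delta * c * tau) <= y i (a + tau).
Proof.
  intros Hi Hj Ha Htau Hdel Hcc Hwd Hyc. destruct Hy as [Hc Hder].
  assert (HK : 0 <= K) by (apply K_nonneg; lia).
  set (C := exp (K * a) * delta * c).
  assert (Hle : exp (K * a) * y i a + (- C * a + 0) <= exp (K * (a + tau)) * y i (a + tau) + (- C * (a + tau) + 0)).
  { apply (piecewise_nondecreasing ts tauD (fun u => exp (K * u) * y i u + (- C * u + 0))
      (fun u => exp (K * u) * (rsum N (fun v => w u i v * (y v u - y i u)) + K * y i u) + - C) a (a + tau) Hd);
      try lra.
    - intros u _. apply continuity_pt_plus; [apply expw_cont, Hc; exact Hi| apply cont_affine].
    - intros u Hp _. apply derivable_pt_lim_plus; [apply expw_deriv, Hder; assumption| apply dlim_affine].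
    - intros u Hp Hu.
      assert (Hk : w u i j * y j u <= rsum N (fun v => w u i v * (y v u - y i u)) + K * y i u)
        by (apply (drift_lower N w W (fun v => y v u) u i j Hw Hi Hj); intros v Hv; apply Hnn; [lra| exact Hv]).
      assert (H1 : delta * c <= w u i j * y j u) by (apply Rmult_le_compat; try lra; [apply Hwd| apply Hyc]; lra).
      assert (H2 : exp (K * a) <= exp (K * u)) by (apply exp_le, Rmult_le_compat_l; lra).
      assert (H3 : exp (K * a) * (delta * c) <= exp (K * u) * (w u i j * y j u))
        by (apply Rmult_le_compat; try lra; [left; apply exp_pos| apply Rmult_le_pos; lra]).
      assert (exp (K * u) * (w u i j * y j u) <= exp (K * u) * (rsum N (fun v => w u i v * (y v u - y i u)) + K * y i u))
        by (apply Rmult_le_compat_l; [left; apply exp_pos| exact Hk]).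
      unfold C. lra. }
  replace tau with (a + tau - a) at 1 by ring. apply exp_weight_cancel.
  assert (0 <= exp (K * a) * y i a) by (apply Rmult_le_pos; [left; apply exp_pos| apply Hnn; [lra| exact Hi]]).
  unfold C in Hle. lra.
Qed.

Variables (delta tau T : R).
Hypotheses (Hdel : 0 < delta) (Htau : 0 < tau) (HT : 0 < T) (HN : (0 < N)%nat).

Let P := T + 2 * tau.
Let X := exp (- K * P).

Lemma X_bounds : 0 < X <= 1.
Proof.
  pose proof (K_nonneg HN). split; [apply exp_pos|]. unfold X. rewrite <- exp_0. apply exp_le.
  assert (0 <= K * P) by (apply Rmult_le_pos; unfold P; lra). lra.
Qed.

Lemma window_factor_cube : window_factor N W delta tau T = X * X * X * Rmin 1 (delta * tau).
Proof. unfold window_factor, X, P, K. rewrite <- !exp_plus. f_equal. f_equal. ring. Qed.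

Lemma window_keep e c i : t0 <= e -> 0 <= c -> (i < N)%nat -> c <= y i e ->
  window_factor N W delta tau T * c <= y i (e + P).
Proof.
  intros He Hc Hi Hci. pose proof X_bounds.
  pose proof (decay i e (e + P) Hi He ltac:(unfold P; lra)) as H1.
  replace (e + P - e) with P in H1 by ring. fold X in H1.
  rewrite window_factor_cube.
  assert (Hmin : 0 <= Rmin 1 (delta * tau) <= 1)
    by (split; [apply Rmin_glb; [lra| apply Rmult_le_pos; lra]| apply Rmin_l]).
  assert (X * X * X * Rmin 1 (delta * tau) <= X).
  { assert (X * X <= 1) by (apply Rle_trans with (1 * 1); [apply Rmult_le_compat; lra| lra]).
    assert (X * X * X <= 1 * X) by (apply Rmult_le_compat_r; lra).
    assert (0 <= X * X * X) by (repeat apply Rmult_le_pos; lra).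
    assert (X * X * X * Rmin 1 (delta * tau) <= X * X * X * 1) by (apply Rmult_le_compat_l; lra). lra. }
  assert (X * c <= X * y i e) by (apply Rmult_le_compat_l; lra).
  assert (X * X * X * Rmin 1 (delta * tau) * c <= X * c) by (apply Rmult_le_compat_r; lra).
  lra.
Qed.

(* If the edge from j to i is active during [e + tau, e + tau + T) and y_j >= c
   at e, then y_i >= window factor times c at e + T + 2 tau: y_j decays slowly,
   the edge is active on a whole dwell window and feeds y_i, which then decays slowly. *)
Lemma window_spread e c i j : weights_lower N w delta -> weights_dwell w tau ->
  t0 <= e -> 0 <= c -> (i < N)%nat -> (j < N)%nat ->
  (exists s, e + tau <= s < e + tau + T /\ w s i j > 0) -> c <= y j e ->
  window_factor N W delta tau T * c <= y i (e + P).
Proof.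
  intros Hlow Hact He Hc Hi Hj [s [Hs Hws]] Hcj. pose proof X_bounds. pose proof (K_nonneg HN).
  destruct (Hact s) as [a [Ha Hwa]]; [lra|].
  assert (Hdl : delta <= w s i j) by (apply Hlow; [exact Hi| exact Hj| lra]).
  assert (HexpP : forall r, 0 <= r <= P -> X <= exp (- K * r)).
  { intros r Hr. apply exp_le. assert (K * r <= K * P) by (apply Rmult_le_compat_l; lra). lra. }
  assert (Hyj : forall u, a <= u <= a + tau -> X * c <= y j u).
  { intros u Hu. pose proof (decay j e u Hj He ltac:(lra)).
    pose proof (HexpP (u - e) ltac:(unfold P; lra)).
    assert (X * c <= exp (- K * (u - e)) * c) by (apply Rmult_le_compat_r; lra).
    assert (exp (- K * (u - e)) * c <= exp (- K * (u - e)) * y j e)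
      by (apply Rmult_le_compat_l; [left; apply exp_pos| exact Hcj]).
    lra. }
  assert (Hg : exp (- K * tau) * (delta * (X * c) * tau) <= y i (a + tau)).
  { apply (growth i j a tau delta (X * c) Hi Hj ltac:(lra) Htau ltac:(lra) ltac:(apply Rmult_le_pos; lra));
      [| exact Hyj].
    intros u Hu. rewrite (Hwa u i j) by lra. exact Hdl. }
  assert (Hpos : 0 <= delta * (X * c) * tau) by (repeat apply Rmult_le_pos; lra).
  assert (X * (delta * (X * c) * tau) <= y i (a + tau)).
  { pose proof (HexpP tau ltac:(unfold P; lra)).
    assert (X * (delta * (X * c) * tau) <= exp (- K * tau) * (delta * (X * c) * tau)) by (apply Rmult_le_compat_r; lra).
    lra. }
  assert (exp (- K * (e + P - (a + tau))) * y i (a + tau) <= y i (e + P))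
    by (apply decay; [exact Hi| lra| unfold P; lra]).
  assert (X * y i (a + tau) <= exp (- K * (e + P - (a + tau))) * y i (a + tau))
    by (apply Rmult_le_compat_r; [apply Hnn; [lra| exact Hi]| apply HexpP; unfold P; lra]).
  assert (X * (X * (delta * (X * c) * tau)) <= X * y i (a + tau)) by (apply Rmult_le_compat_l; lra).
  assert (window_factor N W delta tau T * c <= X * (X * (delta * (X * c) * tau))); [|lra].
  rewrite window_factor_cube. replace (X * (X * (delta * (X * c) * tau))) with (X * X * X * (delta * tau) * c) by ring.
  apply Rmult_le_compat_r; [exact Hc|].
  apply Rmult_le_compat_l; [repeat apply Rmult_le_pos; lra| apply Rmin_r].
Qed.

End Lead.

(** * Spreading along rooted digraphs: a counting argument *)

Fixpoint cnt (n : nat) (f : nat -> bool) : nat :=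
  match n with O => O | S k => (cnt k f + (if f k then 1 else 0))%nat end.

Lemma cnt_le n f : (cnt n f <= n)%nat.
Proof. induction n; simpl; [lia|]. destruct (f n); lia. Qed.

Lemma cnt_mono n f g : (forall i, (i < n)%nat -> f i = true -> g i = true) -> (cnt n f <= cnt n g)%nat.
Proof.
  induction n; intros H; simpl; [lia|].
  assert (cnt n f <= cnt n g)%nat by (apply IHn; intros; apply H; [lia|assumption]).
  destruct (f n) eqn:Ef; [rewrite (H n) by (lia||assumption); lia|]. destruct (g n); lia.
Qed.

Lemma cnt_strict n f g i0 : (forall i, (i < n)%nat -> f i = true -> g i = true) ->
  (i0 < n)%nat -> f i0 = false -> g i0 = true -> (cnt n f + 1 <= cnt n g)%nat.
Proof.
  induction n; intros H Hi Hf Hg; [lia|]. simpl.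
  destruct (Nat.eq_dec i0 n) as [->|Hne].
  - rewrite Hf, Hg. assert (cnt n f <= cnt n g)%nat by (apply cnt_mono; intros; apply H; [lia|assumption]). lia.
  - assert (cnt n f + 1 <= cnt n g)%nat by (apply IHn; [intros; apply H; [lia|assumption]| lia| assumption| assumption]).
    destruct (f n) eqn:Ef; [rewrite (H n) by (lia||assumption); lia|]. destruct (g n); lia.
Qed.

Lemma cnt_full n f : (n <= cnt n f)%nat -> forall i, (i < n)%nat -> f i = true.
Proof.
  intros H i Hi. destruct (f i) eqn:Ef; [reflexivity|].
  assert (cnt n f + 1 <= cnt n (fun _ => true))%nat by (apply (cnt_strict n f _ i); auto).
  pose proof (cnt_le n (fun _ => true)). lia.
Qed.

Lemma cnt_cover n f g : (forall i, (i < n)%nat -> f i = true \/ g i = true) -> (n <= cnt n f + cnt n g)%nat.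
Proof.
  induction n; intros H; simpl; [lia|].
  assert (n <= cnt n f + cnt n g)%nat by (apply IHn; intros; apply H; lia).
  destruct (H n (Nat.lt_succ_diag_r n)) as [E|E]; rewrite E; [destruct (g n)| destruct (f n)]; lia.
Qed.

Lemma last_default {A} (l : list A) (x d1 d2 : A) : last (x :: l) d1 = last (x :: l) d2.
Proof.
  revert x. induction l as [|y l IH]; intros x; [reflexivity|].
  change (last (y :: l) d1 = last (y :: l) d2). apply IH.
Qed.

Lemma chain_exit (E : nat -> nat -> Prop) (S : nat -> bool) p r :
  chain E p -> head p = Some r -> S r = true -> S (last p r) = false ->
  exists a b, In a p /\ In b p /\ E b a /\ S a = true /\ S b = false.
Proof.
  revert r. induction p as [|x rest IH]; intros r Hc Hh Hr Hl; [discriminate|].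
  simpl in Hh. injection Hh as ->.
  destruct rest as [|y rest']; [simpl in Hl; congruence|].
  destruct Hc as [Exy Hc].
  destruct (S y) eqn:Sy.
  - destruct (IH y Hc eq_refl Sy) as [a [b [Ha [Hb H]]]].
    + rewrite (last_default rest' y y r). exact Hl.
    + exists a, b. split; [right; exact Ha| split; [right; exact Hb| exact H]].
  - exists r, y. split; [left; reflexivity| split; [right; left; reflexivity|]]. auto.
Qed.

Lemma spread_step N (Ed : nat -> nat -> Prop) (C C' : nat -> bool) r :
  (forall i, (i < N)%nat -> C i = true -> C' i = true) ->
  (forall i j, (i < N)%nat -> (j < N)%nat -> Ed i j -> C j = true -> C' i = true) ->
  (r < N)%nat -> (forall v, (v < N)%nat -> dpath N Ed r v) -> C r = true ->
  (forall i, (i < N)%nat -> C' i = true) \/ (cnt N C + 1 <= cnt N C')%nat.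
Proof.
  intros HC SC Hr Hp Cr.
  destruct (classic (forall i, (i < N)%nat -> C i = true)) as [Hall|Hnot].
  - left. intros i Hi. apply HC; [exact Hi| apply Hall; exact Hi].
  - right. apply not_all_ex_not in Hnot. destruct Hnot as [v Hv].
    apply imply_to_and in Hv. destruct Hv as [Hv1 Hv2].
    apply Bool.not_true_is_false in Hv2.
    destruct (Hp v Hv1) as [p [_ [Hf [Hh [Hl Hc]]]]].
    destruct (chain_exit Ed C p r Hc Hh Cr) as [a [b [Ha [Hb [Eba [Ca Cb]]]]]]; [rewrite Hl; exact Hv2|].
    rewrite Forall_forall in Hf.
    apply (cnt_strict N C C' b); [exact HC| apply Hf; exact Hb| exact Cb|].
    apply (SC b a); [apply Hf; exact Hb| apply Hf; exact Ha| exact Eba| exact Ca].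
Qed.

(* Each step either fills the family containing the root or enlarges it, and
   the total size cannot exceed 2N. *)
Lemma two_family_spreading N (A B : nat -> nat -> bool) (Ed : nat -> nat -> nat -> Prop) :
  (forall i, (i < N)%nat -> A O i = true \/ B O i = true) ->
  (forall k i, (i < N)%nat -> A k i = true -> A (S k) i = true) ->
  (forall k i, (i < N)%nat -> B k i = true -> B (S k) i = true) ->
  (forall k, exists r, (r < N)%nat /\ forall v, (v < N)%nat -> dpath N (Ed k) r v) ->
  (forall k i j, (i < N)%nat -> (j < N)%nat -> Ed k i j -> A k j = true -> A (S k) i = true) ->
  (forall k i j, (i < N)%nat -> (j < N)%nat -> Ed k i j -> B k j = true -> B (S k) i = true) ->
  (forall i, (i < N)%nat -> A N i = true) \/ (forall i, (i < N)%nat -> B N i = true).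
Proof.
  intros Hcov HA HB Hroot SA SB.
  assert (Hcovk : forall k i, (i < N)%nat -> A k i = true \/ B k i = true).
  { induction k; intros i Hi; [apply Hcov; exact Hi|].
    destruct (IHk i Hi) as [H|H]; [left; apply HA| right; apply HB]; assumption. }
  assert (Claim : forall k, (forall i, (i < N)%nat -> A k i = true) \/ (forall i, (i < N)%nat -> B k i = true)
                   \/ (N + k <= cnt N (A k) + cnt N (B k))%nat).
  { induction k.
    - right; right. rewrite Nat.add_0_r. apply cnt_cover. exact Hcov.
    - destruct IHk as [H|[H|H]].
      + left. intros i Hi. apply HA; [exact Hi| apply H; exact Hi].
      + right; left. intros i Hi. apply HB; [exact Hi| apply H; exact Hi].
      + destruct (Hroot k) as [r [Hr Hp]].
        assert (cnt N (A k) <= cnt N (A (S k)))%nat by (apply cnt_mono; apply HA).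
        assert (cnt N (B k) <= cnt N (B (S k)))%nat by (apply cnt_mono; apply HB).
        destruct (Hcovk k r Hr) as [Cr|Cr].
        * destruct (spread_step N (Ed k) (A k) (A (S k)) r (HA k) (SA k) Hr Hp Cr) as [G|G];
            [left; exact G| right; right; lia].
        * destruct (spread_step N (Ed k) (B k) (B (S k)) r (HB k) (SB k) Hr Hp Cr) as [G|G];
            [right; left; exact G| right; right; lia]. }
  destruct (Claim N) as [H|[H|H]]; [left; exact H| right; exact H|].
  left. apply cnt_full. pose proof (cnt_le N (B N)). lia.
Qed.

(** * First-order consensus dynamics: contraction of the spread and convergence *)

(* Boolean version of <= on reals, to use the counting argument on level sets. *)
Definition ble (a b : R) : bool := if Rle_dec a b then true else false.

Lemma bleP a b : ble a b = true <-> a <= b.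
Proof. unfold ble; destruct (Rle_dec a b); split; intros; auto; discriminate || contradiction. Qed.

Lemma pow_le1 x n : 0 <= x -> x <= 1 -> x ^ n <= 1.
Proof.
  intros H0 H1. induction n; simpl; [lra|].
  assert (x * x ^ n <= 1 * 1) by (apply Rmult_le_compat; try lra; apply pow_le; lra). lra.
Qed.

(* Every window [t, t + T) has a rooted union graph (uniform joint quasi-strong
   connectivity, phrased for the weights). *)
Definition rooted_windows N (w : R -> nat -> nat -> R) T : Prop :=
  forall t, 0 <= t -> exists r, (r < N)%nat /\
    forall v, (v < N)%nat -> dpath N (fun i j => exists s, t <= s < t + T /\ w s i j > 0) r v.

Section Contraction.
Variables (ts : nat -> R) (tauD : R) (N : nat) (w : R -> nat -> nat -> R) (W delta tau T : R).
Hypotheses (Hd : dwell_times ts tauD) (HN : (1 <= N)%nat) (Hw : weights_bounded N w W)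
  (Hlow : weights_lower N w delta) (Hdel : 0 < delta) (Hact : weights_dwell w tau) (Htau : 0 < tau)
  (HT : 0 < T) (Hconn : rooted_windows N w T).

Let rho := window_factor N W delta tau T.
Let P := T + 2 * tau.

Lemma W_nonneg : 0 <= W.
Proof. destruct (Hw 0 O O ltac:(lia) ltac:(lia)); lra. Qed.

Lemma lead_levels y t0 c : consensus_solution ts N w y -> 0 <= t0 -> 0 <= c ->
  (forall t i, t0 <= t -> (i < N)%nat -> 0 <= y i t) ->
  let E k := t0 + INR k * P in
  let A k i := ble (rho ^ k * c) (y i (E k)) in
  (forall k i, (i < N)%nat -> A k i = true -> A (S k) i = true) /\
  (forall k i j, (i < N)%nat -> (j < N)%nat ->
     (exists s, E k + tau <= s < E k + tau + T /\ w s i j > 0) -> A k j = true -> A (S k) i = true).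
Proof.
  intros Hy Ht0 Hc Hnn E A.
  pose proof (window_factor_bounds N W delta tau T W_nonneg Hdel Htau HT) as Hrho. fold rho in Hrho.
  assert (HE : forall k, t0 <= E k)
    by (intros k; unfold E; assert (0 <= INR k * P) by (apply Rmult_le_pos; [apply pos_INR| unfold P; lra]); lra).
  assert (HES : forall k, E (S k) = E k + P) by (intros k; unfold E; rewrite S_INR; ring).
  assert (Hck : forall k, 0 <= rho ^ k * c) by (intros k; apply Rmult_le_pos; [apply pow_le; lra| exact Hc]).
  unfold A. split.
  - intros k i Hi. rewrite !bleP, HES. intros H. simpl. rewrite Rmult_assoc.
    apply (window_keep ts tauD N w W y t0 Hd Hw Hy Ht0 Hnn delta tau T Hdel Htau HT ltac:(lia)); auto.
  - intros k i j Hi Hj Hed. rewrite !bleP, HES. intros H. simpl. rewrite Rmult_assoc.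
    apply (window_spread ts tauD N w W y t0 Hd Hw Hy Ht0 Hnn delta tau T Hdel Htau HT ltac:(lia) (E k) _ i j);
      auto.
Qed.

(* Shift z to y = M - z >= 0 and v = z - mu >= 0; initially each
   agent is at least (M - mu)/2 above the bottom in y or in v, and by
   [two_family_spreading] after N windows every agent is at least
   rho^N (M - mu)/2 above the bottom in one of the two. *)
Lemma contraction z : consensus_solution ts N w z ->
  exists gam L, 0 < gam <= 1 /\ 0 <= L /\
    forall t0 M mu, 0 <= t0 -> (forall i, (i < N)%nat -> mu <= z i t0 <= M) ->
    exists M' mu', M' - mu' <= (1 - gam) * (M - mu) /\
      forall t, t0 + L <= t -> forall i, (i < N)%nat -> mu' <= z i t <= M'.
Proof.
  intros Hz. pose proof (window_factor_bounds N W delta tau T W_nonneg Hdel Htau HT) as Hrho. fold rho in Hrho.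
  assert (HrN : 0 < rho ^ N <= 1) by (split; [apply pow_lt| apply pow_le1]; lra).
  assert (HP : 0 <= INR N * P) by (apply Rmult_le_pos; [apply pos_INR| unfold P; lra]).
  exists (rho ^ N / 2), (INR N * P). split; [lra| split; [exact HP|]].
  intros t0 M mu Ht0 Hb.
  assert (Hbnd : forall t i, t0 <= t -> (i < N)%nat -> mu <= z i t /\ z i t <= M).
  { intros t i Ht Hi. split.
    - apply (min_principle ts tauD N w W Hd Hw z Hz t0 mu Ht0); [intros k Hk; apply Hb; exact Hk| exact Ht| exact Hi].
    - apply (max_principle ts tauD N w W Hd Hw z Hz t0 M Ht0); [intros k Hk; apply Hb; exact Hk| exact Ht| exact Hi]. }
  set (c := (M - mu) / 2).
  assert (Hc : 0 <= c) by (destruct (Hb O ltac:(lia)); unfold c; lra).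
  set (E := fun k => t0 + INR k * P).
  assert (HEN : t0 <= E N) by (unfold E; lra).
  destruct (lead_levels (fun i t => -1 * z i t + M) t0 c (consensus_affine ts N w z (-1) M Hz) Ht0 Hc)
    as [HAk HAs]; [intros t i Ht Hi; destruct (Hbnd t i Ht Hi); lra|].
  destruct (lead_levels (fun i t => 1 * z i t + - mu) t0 c (consensus_affine ts N w z 1 (- mu) Hz) Ht0 Hc)
    as [HBk HBs]; [intros t i Ht Hi; destruct (Hbnd t i Ht Hi); lra|].
  destruct (two_family_spreading N (fun k i => ble (rho ^ k * c) (-1 * z i (E k) + M))
    (fun k i => ble (rho ^ k * c) (1 * z i (E k) + - mu))
    (fun k i j => exists s, E k + tau <= s < E k + tau + T /\ w s i j > 0))
    as [HA|HB]; [| exact HAk| exact HBk| | exact HAs| exact HBs| |].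
  - intros i Hi. rewrite !bleP. destruct (Hbnd t0 i ltac:(lra) Hi).
    unfold E. replace (t0 + INR 0 * P) with t0 by (simpl; ring). simpl.
    destruct (Rle_dec c (M - z i t0)); [left|right]; unfold c in *; lra.
  - intros k. apply Hconn. unfold E.
    assert (0 <= INR k * P) by (apply Rmult_le_pos; [apply pos_INR| unfold P; lra]). lra.
  - exists (M - rho ^ N * c), mu. split; [unfold c; right; field|].
    intros t Ht i Hi. split; [apply (Hbnd t i); [lra| exact Hi]|].
    apply (max_principle ts tauD N w W Hd Hw z Hz (E N) (M - rho ^ N * c)); [lra| |unfold E; lra| exact Hi].
    intros k Hk. specialize (HA k Hk). rewrite bleP in HA. lra.
  - exists M, (mu + rho ^ N * c). split; [unfold c; right; field|].
    intros t Ht i Hi. split; [|apply (Hbnd t i); [lra| exact Hi]].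
    apply (min_principle ts tauD N w W Hd Hw z Hz (E N) (mu + rho ^ N * c)); [lra| |unfold E; lra| exact Hi].
    intros k Hk. specialize (HB k Hk). rewrite bleP in HB. lra.
Qed.

Lemma small_pow q D eps : 0 <= q < 1 -> 0 <= D -> 0 < eps -> exists k, q ^ k * D < eps.
Proof.
  intros Hq HD He.
  destruct (pow_lt_1_zero q ltac:(rewrite Rabs_right; lra) (eps / (D + 1)) ltac:(apply Rdiv_lt_0_compat; lra))
    as [k Hk].
  exists k. specialize (Hk k (Nat.le_refl k)). rewrite Rabs_right in Hk by (apply Rle_ge, pow_le; lra).
  assert (q ^ k * (D + 1) < eps / (D + 1) * (D + 1)) by (apply Rmult_lt_compat_r; lra).
  replace (eps / (D + 1) * (D + 1)) with eps in H by (field; lra).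
  assert (0 <= q ^ k) by (apply pow_le; lra). nra.
Qed.

(* Iterating the contraction from the initial range [-M0, M0], the spread of
   z becomes arbitrarily small after a finite time. *)
Lemma spread_vanishes z : consensus_solution ts N w z ->
  forall eps, 0 < eps -> exists T0 M mu, M - mu < eps /\
    forall t, T0 <= t -> forall i, (i < N)%nat -> mu <= z i t <= M.
Proof.
  intros Hz eps He.
  destruct (contraction z Hz) as [g [L [Hg [HL Hctr]]]].
  set (M0 := rsum N (fun j => Rabs (z j 0))).
  assert (HM0 : 0 <= M0) by (apply rsum_nonneg; intros; apply Rabs_pos).
  assert (Hiter : forall k, exists M mu, M - mu <= (1 - g) ^ k * (2 * M0) /\
     forall t, INR (S k) * L <= t -> forall i, (i < N)%nat -> mu <= z i t <= M).
  { induction k.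
    - destruct (Hctr 0 M0 (- M0)) as [M' [mu' [H1 H2]]]; [lra| |].
      + intros i Hi. pose proof (rsum_ge_term N (fun j => Rabs (z j 0)) i ltac:(intros; apply Rabs_pos) Hi).
        fold M0 in H. pose proof (Rle_abs (z i 0)). pose proof (Rle_abs (- z i 0)). rewrite Rabs_Ropp in H1. lra.
      + exists M', mu'. split; [simpl; nra|]. intros t Ht. apply H2. simpl in Ht. lra.
    - destruct IHk as [M [mu [H1 H2]]].
      assert (Hpos : 0 <= INR (S k) * L) by (apply Rmult_le_pos; [apply pos_INR| lra]).
      destruct (Hctr (INR (S k) * L) M mu Hpos) as [M' [mu' [H3 H4]]]; [intros i Hi; apply H2; [lra| exact Hi]|].
      exists M', mu'. split.
      + simpl. assert ((1 - g) * (M - mu) <= (1 - g) * ((1 - g) ^ k * (2 * M0))) by (apply Rmult_le_compat_l; lra).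
        lra.
      + intros t Ht. apply H4. rewrite S_INR in Ht. lra. }
  destruct (small_pow (1 - g) (2 * M0) eps ltac:(lra) ltac:(lra) He) as [k Hk].
  destruct (Hiter k) as [M [mu [H1 H2]]].
  exists (INR (S k) * L), M, mu. split; [lra| exact H2].
Qed.

(* Consensus: all z_i converge to a common limit.  The values z_0(n) form a
   Cauchy sequence by [spread_vanishes], and its limit attracts every z_i. *)
Lemma consensus_convergence z : consensus_solution ts N w z ->
  exists l, forall i, (i < N)%nat -> cv_infty_to (z i) l.
Proof.
  intros Hz.
  set (u := fun n : nat => z O (INR n)).
  assert (Hcau : Cauchy_crit u).
  { intros eps He. destruct (spread_vanishes z Hz eps He) as [T0 [M [mu [H1 H2]]]].
    destruct (nat_unbounded T0) as [n0 Hn0]. exists n0. intros n m Hn Hm.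
    apply le_INR in Hn. apply le_INR in Hm.
    destruct (H2 (INR n) ltac:(lra) O ltac:(lia)). destruct (H2 (INR m) ltac:(lra) O ltac:(lia)).
    unfold Rdist, u. apply Rabs_def1; lra. }
  destruct (R_complete u Hcau) as [l Hl].
  exists l. intros i Hi eps He.
  destruct (spread_vanishes z Hz (eps / 2) ltac:(lra)) as [T0 [M [mu [H1 H2]]]].
  destruct (Hl (eps / 2) ltac:(lra)) as [n1 Hn1].
  destruct (nat_unbounded T0) as [n0 Hn0].
  set (n := Nat.max n0 n1).
  assert (INR n0 <= INR n) by (apply le_INR; lia).
  specialize (Hn1 n ltac:(lia)). unfold Rdist, u in Hn1.
  exists T0. intros t Ht.
  destruct (H2 t ltac:(lra) i Hi). destruct (H2 (INR n) ltac:(lra) O ltac:(lia)).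
  apply Rabs_def2 in Hn1. apply Rabs_def1; lra.
Qed.

End Contraction.

(** * Factorization of the characteristic polynomial over C *)

Definition copp (z : R * R) : R * R := (- fst z, - snd z).

Fixpoint csum (n : nat) (f : nat -> R * R) : R * R :=
  match n with O => (0, 0) | S k => cadd (csum k f) (f k) end.

(* [prodcoef lam k i] is the coefficient of s^i in prod_{l<k} (s - lam l). *)
Fixpoint prodcoef (lam : nat -> R * R) (k i : nat) : R * R :=
  match k with
  | O => match i with O => (1, 0) | S _ => (0, 0) end
  | S k' => cadd (match i with O => (0, 0) | S i' => prodcoef lam k' i' end)
                 (cmul (copp (lam k')) (prodcoef lam k' i))
  end.

Lemma csum_ext n f g : (forall i, (i < n)%nat -> f i = g i) -> csum n f = csum n g.
Proof. induction n; intros H; simpl; [reflexivity|]. rewrite IHn, H; [reflexivity|lia|intros; apply H; lia]. Qed.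

Lemma csum_shift n g : cadd (g O) (csum n (fun i => g (S i))) = csum (S n) g.
Proof.
  induction n; simpl.
  - destruct (g O); unfold cadd; simpl; f_equal; ring.
  - simpl in IHn. rewrite <- IHn. destruct (g O), (csum n (fun i => g (S i))), (g (S n)).
    unfold cadd; simpl; f_equal; ring.
Qed.

Lemma csum_cadd n f g : csum n (fun j => cadd (f j) (g j)) = cadd (csum n f) (csum n g).
Proof.
  induction n; simpl; [unfold cadd; simpl; f_equal; ring|]. rewrite IHn.
  destruct (csum n f), (csum n g), (f n), (g n); unfold cadd; simpl; f_equal; ring.
Qed.

Lemma csum_cmul n c f : csum n (fun j => cmul c (f j)) = cmul c (csum n f).
Proof.
  induction n; simpl; [destruct c; unfold cmul; simpl; f_equal; ring|]. rewrite IHn.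
  destruct c, (csum n f), (f n); unfold cadd, cmul; simpl; f_equal; ring.
Qed.

Lemma csum_real n (r y : nat -> R) :
  csum n (fun j => cmul (r j, 0) (y j, 0)) = (rsum n (fun j => r j * y j), 0).
Proof. induction n; simpl; [reflexivity|]. rewrite IHn. unfold cadd, cmul; simpl; f_equal; ring. Qed.

Lemma cadd_comm z w : cadd z w = cadd w z.
Proof. destruct z, w; unfold cadd; simpl; f_equal; ring. Qed.

Lemma fold_map_seq f n st :
  fold_right cadd (0, 0) (map f (seq st n)) = csum n (fun i => f (st + i)%nat).
Proof.
  revert st. induction n; intros st; [reflexivity|].
  cbn [seq map fold_right]. rewrite IHn. rewrite <- csum_shift. rewrite Nat.add_0_r.
  f_equal. apply csum_ext. intros i _. f_equal. lia.
Qed.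

Lemma charpoly_csum d a s : charpoly (S d) a s =
  cadd (cpow s d) (csum d (fun i => cmul (cofr (a (S i))) (cpow s i))).
Proof.
  unfold charpoly. replace (S d - 1)%nat with d by lia. f_equal.
  rewrite fold_map_seq. apply csum_ext. intros i _. f_equal; f_equal; lia.
Qed.

Lemma charpoly_at0 d a : (1 <= d)%nat -> charpoly (S d) a (0, 0) = (a 1%nat, 0).
Proof.
  intros Hd. rewrite charpoly_csum. destruct d as [|d]; [lia|].
  assert (Hp : forall i, cpow (0, 0) (S i) = (0, 0))
    by (intros i; simpl; destruct (cpow (0,0) i); unfold cmul; simpl; f_equal; ring).
  rewrite Hp, <- csum_shift. simpl cpow.
  rewrite (csum_ext d _ (fun _ => (0, 0))).
  - assert (Hz : forall n, csum n (fun _ => (0:R, 0:R)) = (0, 0)).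
    { induction n; simpl; [reflexivity|]. rewrite IHn. unfold cadd; simpl; f_equal; ring. }
    rewrite Hz. unfold cadd, cmul, cofr; simpl; f_equal; ring.
  - intros i _. cbv beta. destruct (cpow (0, 0) i). unfold cmul, cofr; simpl; f_equal; ring.
Qed.

(* Hurwitz stability forces a_1 <> 0, since 0 is then not a root. *)
Lemma hurwitz_a1 d a : (1 <= d)%nat -> hurwitz (S d) a -> a 1%nat <> 0.
Proof.
  intros Hd Hh E. pose proof (Hh (0, 0)) as H. rewrite charpoly_at0 in H by exact Hd.
  rewrite E in H. specialize (H eq_refl). simpl in H. lra.
Qed.

Lemma prodcoef_zero lam k j : (k < j)%nat -> prodcoef lam k j = (0, 0).
Proof.
  revert j. induction k; intros j Hj; simpl; [destruct j; [lia| reflexivity]|].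
  destruct j as [|j]; [lia|]. rewrite (IHk j), (IHk (S j)) by lia.
  unfold cadd, cmul, copp; simpl; f_equal; ring.
Qed.

Lemma prodcoef_lead lam k : prodcoef lam k k = (1, 0).
Proof.
  induction k; simpl; [reflexivity|]. rewrite IHk, prodcoef_zero by lia.
  unfold cadd, cmul, copp; simpl; f_equal; ring.
Qed.

(* Over the algebraically closed field R[i], s^d + a_d s^{d-1} + ... + a_1 splits
   as prod_{j<d} (s - lam_j); in terms of the pairs of Defs: every lam_j is a root
   of [charpoly] and the coefficients of the product are those of [K2]. *)
Module Factorization.
Import HB.structures.
Import mathcomp.boot.all_boot mathcomp.order.all_order mathcomp.algebra.all_algebra.
Import mathcomp.reals_stdlib.Rstruct mathcomp.real_closed.complex.
Import GRing.Theory.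
Local Open Scope ring_scope.

Definition to_pair (x : R[i]) : R * R := (complex.Re x, complex.Im x).

Lemma to_pair_mul (x y : R[i]) : to_pair (x * y) = cmul (to_pair x) (to_pair y).
Proof. by case: x => a b; case: y => c d. Qed.
Lemma to_pair_add (x y : R[i]) : to_pair (x + y) = cadd (to_pair x) (to_pair y).
Proof. by case: x => a b; case: y => c d. Qed.
Lemma to_pair_opp (x : R[i]) : to_pair (- x) = copp (to_pair x).
Proof. by case: x => a b. Qed.
Lemma to_pair_exp (x : R[i]) n : to_pair (x ^+ n) = cpow (to_pair x) n.
Proof. elim: n => [|n IH]; first by []. by rewrite exprS to_pair_mul IH. Qed.
Lemma to_pair_sum n (F : nat -> R[i]) : to_pair (\sum_(i < n) F i) = csum n (fun i => to_pair (F i)).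
Proof. elim: n => [|n IH]; first by rewrite big_ord0. by rewrite big_ord_recr to_pair_add IH. Qed.

Lemma factorization (d : nat) (a : nat -> R) : exists lam : nat -> R * R,
  (forall j, (j < d)%coq_nat -> charpoly (S d) a (lam j) = (0%R, 0%R)) /\
  (forall i, (i <= d)%coq_nat -> prodcoef lam d i = if Nat.eqb i d then (1%R, 0%R) else (a (S i), 0%R)).
Proof.
pose E := fun i : nat => if i == d then (1 : R[i]) else ((a i.+1)%:C)%C.
pose P := \poly_(i < d.+1) E i.
have sP : size P = d.+1 by apply: size_poly_eq; rewrite /E eqxx oner_eq0.
have lP : lead_coef P = 1 by rewrite lead_coefE sP coef_poly ltnSn /E eqxx.
have [rs Hrs] := closed_field_poly_normal P.
rewrite lP scale1r in Hrs.
have srs : size rs = d by move: (size_prod_XsubC rs id); rewrite -Hrs sP => -[].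
exists (fun j => to_pair (nth 0 rs j)); split.
- move=> j /ltP jd.
  have /eqP rt : root P (nth 0 rs j) by rewrite Hrs root_prod_XsubC mem_nth // srs.
  have -> : charpoly d.+1 a (to_pair (nth 0 rs j)) = to_pair P.[nth 0 rs j].
    rewrite charpoly_csum horner_poly big_ord_recr /= to_pair_add.
    rewrite (to_pair_sum d (fun i => E i * rs`_j ^+ i)) /E eqxx mul1r to_pair_exp cadd_comm.
    congr cadd; apply: csum_ext => i /ltP id.
    have -> : (i == d) = false by apply/negbTE; rewrite neq_ltn id.
    by rewrite to_pair_mul to_pair_exp.
  by rewrite rt.
- move=> i /leP id.
  pose Q k := \prod_(j < k) ('X - (rs`_j)%:P).
  have HQ k i0 : to_pair (Q k)`_i0 = prodcoef (fun j => to_pair (nth 0 rs j)) k i0.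
    elim: k i0 => [|k IH] i0; first by rewrite /Q big_ord0 coef1; case: i0.
    rewrite /Q big_ord_recr /= -/(Q k) mulrBr coefB coefMX coefMC -mulrN [_ * - _]mulrC.
    rewrite to_pair_add to_pair_mul to_pair_opp.
    by case: i0 => [|i0] /=; rewrite ?IH.
  have PQ : P = Q d by rewrite Hrs (big_nth 0) srs big_mkord.
  rewrite -HQ -PQ coef_poly /E.
  have -> : (i < d.+1)%N by rewrite ltnS.
  by case: (Nat.eqb_spec i d) => [->|/eqP /negbTE ->]; rewrite ?eqxx.
Qed.
End Factorization.

Lemma cv_const c : cv_infty_to (fun _ => c) c.
Proof. intros e He. exists 0. intros t _. rewrite Rminus_diag, Rabs_R0; lra. Qed.

Lemma cv_plus f g A B : cv_infty_to f A -> cv_infty_to g B -> cv_infty_to (fun t => f t + g t) (A + B).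
Proof.
  intros Hf Hg e He. destruct (Hf (e/2) ltac:(lra)) as [T1 H1]. destruct (Hg (e/2) ltac:(lra)) as [T2 H2].
  exists (Rmax T1 T2). intros t Ht. specialize (H1 t ltac:(pose proof (Rmax_l T1 T2); lra)).
  specialize (H2 t ltac:(pose proof (Rmax_r T1 T2); lra)).
  apply Rabs_def2 in H1. apply Rabs_def2 in H2. apply Rabs_def1; lra.
Qed.

Lemma cv_scal c f A : cv_infty_to f A -> cv_infty_to (fun t => c * f t) (c * A).
Proof.
  intros Hf e He. pose proof (Rabs_pos c) as Hc.
  destruct (Hf (e / (Rabs c + 1)) ltac:(apply Rdiv_lt_0_compat; lra)) as [T H].
  exists T. intros t Ht. specialize (H t Ht).
  replace (c * f t - c * A) with (c * (f t - A)) by ring. rewrite Rabs_mult.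
  apply Rle_lt_trans with ((Rabs c + 1) * Rabs (f t - A)); [apply Rmult_le_compat_r; [apply Rabs_pos| lra]|].
  apply (Rmult_lt_compat_l (Rabs c + 1)) in H; [|lra].
  replace ((Rabs c + 1) * (e / (Rabs c + 1))) with e in H by (field; lra). exact H.
Qed.

Lemma cv_ext f g A : (forall t, f t = g t) -> cv_infty_to f A -> cv_infty_to g A.
Proof. intros E H e He. destruct (H e He) as [T HT]. exists T. intros t Ht. rewrite <- E. apply HT; exact Ht. Qed.

Lemma cv_eq f A B : cv_infty_to f A -> A = B -> cv_infty_to f B.
Proof. intros H ->; exact H. Qed.

Lemma cv_unique f A B : cv_infty_to f A -> cv_infty_to f B -> A = B.
Proof.
  intros HA HB. destruct (Req_dec A B) as [E|E]; [exact E|exfalso].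
  set (e := Rabs (A - B) / 2).
  assert (He : e > 0) by (unfold e; apply Rdiv_lt_0_compat; [apply Rabs_pos_lt; lra| lra]).
  destruct (HA e He) as [T1 H1]. destruct (HB e He) as [T2 H2].
  set (t := Rmax T1 T2).
  specialize (H1 t ltac:(apply Rle_ge, Rmax_l)). specialize (H2 t ltac:(apply Rle_ge, Rmax_r)).
  pose proof (Rabs_triang (A - f t) (f t - B)).
  replace (A - f t + (f t - B)) with (A - B) in H by ring.
  rewrite <- Rabs_Ropp in H1. replace (- (f t - A)) with (A - f t) in H1 by ring.
  unfold e in *. lra.
Qed.

Lemma rsum_cv0 n (F : nat -> R -> R) : (forall c, (c < n)%nat -> cv_infty_to (F c) 0) ->
  cv_infty_to (fun t => rsum n (fun c => F c t)) 0.
Proof.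
  induction n; intros H; simpl; [apply cv_const|].
  apply cv_eq with (0 + 0); [|ring]. apply cv_plus; [apply IHn; intros|]; apply H; lia.
Qed.

(* A function converging at infinity cannot have a derivative converging to
   B > 0: it would grow by at least B/2 per unit time. *)
Lemma derivative_limit_nonpos ts tauD f g A B : dwell_times ts tauD ->
  (forall t, continuity_pt f t) -> (forall t, on_piece ts t -> derivable_pt_lim f t (g t)) ->
  cv_infty_to f A -> cv_infty_to g B -> B <= 0.
Proof.
  intros Hd Hc Hder HfA HgB. apply Rnot_lt_le. intros Hgt.
  destruct (HgB (B / 2) ltac:(lra)) as [T1 H1]. destruct (HfA 1 ltac:(lra)) as [T2 H2].
  set (T := Rmax (Rmax T1 0) T2).
  assert (HT : T1 <= T /\ 0 <= T /\ T2 <= T).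
  { unfold T. pose proof (Rmax_l (Rmax T1 0) T2). pose proof (Rmax_r (Rmax T1 0) T2).
    pose proof (Rmax_l T1 0). pose proof (Rmax_r T1 0). lra. }
  assert (HB8 : 0 < 8 / B) by (apply Rdiv_lt_0_compat; lra).
  assert (Hineq : f T + (- (B / 2) * T + 0) <= f (T + 8 / B) + (- (B / 2) * (T + 8 / B) + 0)).
  { apply (piecewise_nondecreasing ts tauD (fun u => f u + (- (B / 2) * u + 0)) (fun u => g u + - (B / 2))
      T (T + 8 / B) Hd); try lra.
    - intros t _. apply continuity_pt_plus; [apply Hc| apply cont_affine].
    - intros t Hp _. apply derivable_pt_lim_plus; [apply Hder; exact Hp| apply dlim_affine].
    - intros t Hp Ht. specialize (H1 t ltac:(lra)). apply Rabs_def2 in H1. lra. }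
  assert (B / 2 * (8 / B) = 4) by (field; lra).
  pose proof (H2 T ltac:(lra)) as Ha. pose proof (H2 (T + 8 / B) ltac:(lra)) as Hb.
  apply Rabs_def2 in Ha. apply Rabs_def2 in Hb. nra.
Qed.

Lemma derivative_limit_zero ts tauD f g A B : dwell_times ts tauD ->
  (forall t, continuity_pt f t) -> (forall t, on_piece ts t -> derivable_pt_lim f t (g t)) ->
  cv_infty_to f A -> cv_infty_to g B -> B = 0.
Proof.
  intros Hd Hc Hder HfA HgB.
  pose proof (derivative_limit_nonpos ts tauD f g A B Hd Hc Hder HfA HgB).
  assert (- B <= 0); [|lra].
  apply (derivative_limit_nonpos ts tauD (fun t => -1 * f t) (fun t => -1 * g t) (-1 * A) (-B) Hd).
  - intros t. apply continuity_pt_mult; [apply cont_const| apply Hc].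
  - intros t Hp. apply dlim_scal, Hder; exact Hp.
  - apply cv_scal; exact HfA.
  - apply cv_eq with (-1 * B); [apply cv_scal; exact HgB| ring].
Qed.

(** * Stable first-order equations with convergent input *)

(* Dissipation inequality for u' = lam u + F with Re lam = al < 0, written in
   real coordinates e = u - equilibrium: if the input error g = F - lim F is
   below eta, the squared distance V = |e|^2 satisfies V' <= al V - 2 eta^2 / al. *)
Lemma dissipation al be e1 e2 g1 g2 eta : al < 0 -> Rabs g1 < eta -> Rabs g2 < eta ->
  2 * e1 * (al * e1 - be * e2 + g1) + 2 * e2 * (be * e1 + al * e2 + g2)
  <= al * (e1 * e1 + e2 * e2) - 2 * eta * eta / al.
Proof.
  intros Hal H1 H2. set (a := - al). assert (Ha : 0 < a) by (unfold a; lra).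
  apply Rabs_def2 in H1. apply Rabs_def2 in H2.
  assert (Hsq : forall e g, 2 * (e * g) <= a * (e * e) + g * g / a).
  { intros e g. assert (0 <= (a * e - g) * (a * e - g) / a)
      by (apply Rmult_le_pos; [apply Rle_0_sqr| left; apply Rinv_0_lt_compat; lra]).
    replace ((a * e - g) * (a * e - g) / a) with (a * (e * e) + g * g / a - 2 * (e * g)) in H by (field; lra).
    lra. }
  pose proof (Hsq e1 g1). pose proof (Hsq e2 g2).
  assert (g1 * g1 / a + g2 * g2 / a <= 2 * eta * eta / a).
  { replace (2 * eta * eta / a) with (eta * eta / a + eta * eta / a) by (field; lra).
    apply Rplus_le_compat; unfold Rdiv; apply Rmult_le_compat_r; try (left; apply Rinv_0_lt_compat; lra); nra. }
  replace (2 * eta * eta / al) with (- (2 * eta * eta / a)) by (unfold a; field; lra).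
  unfold a in *. lra.
Qed.

Lemma exp_approach ts tauD (V dV : R -> R) a c0 T0 : dwell_times ts tauD -> 0 <= T0 ->
  (forall t, continuity_pt V t) -> (forall t, on_piece ts t -> derivable_pt_lim V t (dV t)) ->
  (forall t, T0 < t -> dV t <= - a * (V t - c0)) ->
  forall t, T0 <= t -> V t - c0 <= exp (- a * (t - T0)) * (V T0 - c0).
Proof.
  intros Hd HT0 Hc Hder Hb t Ht.
  assert (-1 * (exp (a * T0) * (V T0 + - c0)) <= -1 * (exp (a * t) * (V t + - c0))).
  { apply (piecewise_nondecreasing ts tauD (fun u => -1 * (exp (a * u) * (V u + - c0)))
      (fun u => -1 * (exp (a * u) * (dV u + a * (V u + - c0)))) T0 t Hd HT0); try lra.
    - intros u _. apply continuity_pt_mult; [apply cont_const|].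
      apply expw_cont, continuity_pt_plus; [apply Hc| apply cont_const].
    - intros u Hp _. apply dlim_scal, (expw_deriv a (fun u => V u + - c0)).
      replace (dV u) with (dV u + 0) by ring.
      apply derivable_pt_lim_plus; [apply Hder; exact Hp| apply derivable_pt_lim_const].
    - intros u Hp Hu. specialize (Hb u ltac:(lra)). pose proof (exp_pos (a * u)).
      assert (exp (a * u) * (dV u + a * (V u + - c0)) <= exp (a * u) * 0) by (apply Rmult_le_compat_l; lra).
      lra. }
  rewrite (exp_shift a T0 t).
  replace (V t - c0) with (exp (- (a * t)) * (exp (a * t) * (V t + - c0)))
    by (rewrite <- Rmult_assoc, <- exp_plus; replace (- (a * t) + a * t) with 0 by ring; rewrite exp_0; ring).
  rewrite (Rmult_comm (exp (a * T0))), Rmult_assoc.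
  apply Rmult_le_compat_l; [left; apply exp_pos| lra].
Qed.

Lemma exp_neg_bound a s : 0 < a -> 0 < s -> exp (- (a * s)) <= 1 / (1 + a * s).
Proof.
  intros Ha Hs. assert (Has : 0 < a * s) by (apply Rmult_lt_0_compat; lra).
  pose proof (exp_ineq1 (a * s) ltac:(lra)) as H.
  rewrite exp_Ropp. unfold Rdiv. rewrite Rmult_1_l. apply Rinv_le_contravar; lra.
Qed.

Lemma dsq (f : R -> R) c f't t : derivable_pt_lim f t f't ->
  derivable_pt_lim (fun u => (f u - c) * (f u - c)) t (2 * (f t - c) * f't).
Proof.
  intros H. assert (H1 : derivable_pt_lim (fun u => f u - c) t (f't - 0))
    by (apply (derivable_pt_lim_minus f (fun _ => c)); [exact H| apply derivable_pt_lim_const]).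
  rewrite Rminus_0_r in H1.
  pose proof (derivable_pt_lim_mult _ _ _ _ _ H1 H1) as H2. unfold mult_fct in H2.
  replace (2 * (f t - c) * f't) with (f't * (f t - c) + (f t - c) * f't) by ring. exact H2.
Qed.

Lemma exp_approach_small (V : R -> R) a c0 T0 eps : 0 < a -> 0 < eps -> (forall t, 0 <= V t) ->
  0 <= c0 <= eps * eps / 2 ->
  (forall t, T0 <= t -> V t - c0 <= exp (- a * (t - T0)) * (V T0 - c0)) ->
  exists T, forall t, t >= T -> V t < eps * eps.
Proof.
  intros Ha He HV0 Hc0 Hdecay. pose proof (HV0 T0). assert (0 < eps * eps) by nra.
  set (s := 4 * (V T0 + 1) / (a * (eps * eps))).
  assert (Hs : 0 < s) by (unfold s; apply Rdiv_lt_0_compat; [lra| apply Rmult_lt_0_compat; lra]).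
  exists (T0 + s). intros t Ht. specialize (Hdecay t ltac:(lra)).
  assert (exp (- a * (t - T0)) <= exp (- (a * s)))
    by (apply exp_le; assert (a * s <= a * (t - T0)) by (apply Rmult_le_compat_l; lra); lra).
  pose proof (exp_neg_bound a s Ha Hs).
  assert (Has : a * s = 4 * (V T0 + 1) / (eps * eps)) by (unfold s; field; lra).
  assert (Hfrac : V T0 * (1 / (1 + a * s)) < eps * eps / 4).
  { rewrite Has.
    replace (V T0 * (1 / (1 + 4 * (V T0 + 1) / (eps * eps)))) with (V T0 * (eps * eps) / (eps * eps + 4 * (V T0 + 1)))
      by (field; split; lra).
    apply Rmult_lt_reg_r with (eps * eps + 4 * (V T0 + 1)); [lra|].
    unfold Rdiv. rewrite Rmult_assoc, Rinv_l by lra. nra. }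
  pose proof (exp_pos (- a * (t - T0))).
  assert (exp (- a * (t - T0)) * (V T0 - c0) <= exp (- a * (t - T0)) * V T0) by (apply Rmult_le_compat_l; lra).
  assert (exp (- a * (t - T0)) * V T0 <= (1 / (1 + a * s)) * V T0) by (apply Rmult_le_compat_r; lra).
  lra.
Qed.

(* Along  u' = lam u + F  (real coordinates, Re lam = al < 0) with F -> l, the
   squared distance V to the equilibrium (p, q) = -l/lam eventually falls below
   any eps^2: once F is within eta of l, [dissipation] gives V' <= al (V - c0)
   with c0 small, and [exp_approach] concludes. *)
Lemma sq_distance_vanishes ts tauD (u1 u2 F1 F2 : R -> R) al be l1 l2 p q :
  dwell_times ts tauD -> al < 0 ->
  (forall t, continuity_pt u1 t) -> (forall t, continuity_pt u2 t) ->
  (forall t, on_piece ts t -> derivable_pt_lim u1 t (al * u1 t - be * u2 t + F1 t) /\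
                              derivable_pt_lim u2 t (be * u1 t + al * u2 t + F2 t)) ->
  cv_infty_to F1 l1 -> cv_infty_to F2 l2 ->
  al * p - be * q + l1 = 0 -> be * p + al * q + l2 = 0 ->
  forall eps, 0 < eps -> exists T, forall t, t >= T ->
    (u1 t - p) * (u1 t - p) + (u2 t - q) * (u2 t - q) < eps * eps.
Proof.
  intros Hd Hal Hc1 Hc2 Hder HF1 HF2 Ep Eq.
  set (a := - al). assert (Ha : 0 < a) by (unfold a; lra).
  set (V := fun u => (u1 u - p) * (u1 u - p) + (u2 u - q) * (u2 u - q)).
  assert (HV0 : forall t, 0 <= V t) by (intros t; unfold V; apply Rplus_le_le_0_compat; apply Rle_0_sqr).
  intros eps He.
  set (eta := a * eps / 4). assert (Heta : 0 < eta) by (unfold eta; nra).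
  destruct (HF1 eta Heta) as [T1 H1]. destruct (HF2 eta Heta) as [T2 H2].
  set (T0 := Rmax (Rmax T1 T2) 0).
  assert (HT0 : T1 <= T0 /\ T2 <= T0 /\ 0 <= T0).
  { unfold T0. pose proof (Rmax_l (Rmax T1 T2) 0). pose proof (Rmax_r (Rmax T1 T2) 0).
    pose proof (Rmax_l T1 T2). pose proof (Rmax_r T1 T2). lra. }
  set (c0 := 2 * eta * eta / (a * a)).
  assert (Hc0 : c0 = eps * eps / 8) by (unfold c0, eta; field; lra).
  set (dV := fun u => 2 * (u1 u - p) * (al * u1 u - be * u2 u + F1 u) + 2 * (u2 u - q) * (be * u1 u + al * u2 u + F2 u)).
  assert (Happ := exp_approach ts tauD V dV a c0 T0 Hd ltac:(lra)).
  assert (Hdecay : forall t, T0 <= t -> V t - c0 <= exp (- a * (t - T0)) * (V T0 - c0)).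
  { apply Happ.
    - intros t. unfold V. apply continuity_pt_plus; apply continuity_pt_mult; apply continuity_pt_minus;
        try apply cont_const; auto.
    - intros t Hp. destruct (Hder t Hp) as [D1 D2]. unfold V, dV.
      apply (derivable_pt_lim_plus (fun u => (u1 u - p) * (u1 u - p)) (fun u => (u2 u - q) * (u2 u - q)));
        apply dsq; assumption.
    - intros t Ht. specialize (H1 t ltac:(lra)). specialize (H2 t ltac:(lra)).
      pose proof (dissipation al be (u1 t - p) (u2 t - q) (F1 t - l1) (F2 t - l2) eta Hal H1 H2).
      assert (al * c0 = 2 * eta * eta / al) by (unfold c0, a; field; lra).
      unfold dV, V. replace (- a) with al by (unfold a; ring).
      replace (al * u1 t - be * u2 t + F1 t) with (al * (u1 t - p) - be * (u2 t - q) + (F1 t - l1)) by lra.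
      replace (be * u1 t + al * u2 t + F2 t) with (be * (u1 t - p) + al * (u2 t - q) + (F2 t - l2)) by lra.
      lra. }
  apply (exp_approach_small V a c0 T0 eps Ha He HV0 ltac:(rewrite Hc0; split; nra) Hdecay).
Qed.

(* A stable complex first-order equation  u' = lam u + F  (in real coordinates,
   Re lam = al < 0) with convergent input converges, to the equilibrium -F(oo)/lam. *)
Lemma stable_first_order ts tauD (u1 u2 F1 F2 : R -> R) al be l1 l2 :
  dwell_times ts tauD -> al < 0 ->
  (forall t, continuity_pt u1 t) -> (forall t, continuity_pt u2 t) ->
  (forall t, on_piece ts t -> derivable_pt_lim u1 t (al * u1 t - be * u2 t + F1 t) /\
                              derivable_pt_lim u2 t (be * u1 t + al * u2 t + F2 t)) ->
  cv_infty_to F1 l1 -> cv_infty_to F2 l2 ->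
  exists p q, cv_infty_to u1 p /\ cv_infty_to u2 q.
Proof.
  intros Hd Hal Hc1 Hc2 Hder HF1 HF2.
  set (n := al * al + be * be). assert (Hn : 0 < n) by (unfold n; nra).
  set (p := - (al * l1 + be * l2) / n). set (q := (be * l1 - al * l2) / n).
  assert (Ep : al * p - be * q + l1 = 0) by (unfold p, q, n; field; apply Rgt_not_eq; nra).
  assert (Eq : be * p + al * q + l2 = 0) by (unfold p, q, n; field; apply Rgt_not_eq; nra).
  pose proof (sq_distance_vanishes ts tauD u1 u2 F1 F2 al be l1 l2 p q Hd Hal Hc1 Hc2 Hder HF1 HF2 Ep Eq) as Main.
  exists p, q. split; intros eps He; destruct (Main eps He) as [T HT]; exists T; intros t Ht;
    specialize (HT t Ht); pose proof (Rle_0_sqr (u1 t - p)); pose proof (Rle_0_sqr (u2 t - q));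
    unfold Rsqr in *.
  - destruct (Rcase_abs (u1 t - p)) as [Hl|Hl]; [rewrite Rabs_left by lra| rewrite Rabs_right by lra]; nra.
  - destruct (Rcase_abs (u2 t - q)) as [Hl|Hl]; [rewrite Rabs_left by lra| rewrite Rabs_right by lra]; nra.
Qed.

(** * Integrator chains driven by a stable polynomial *)

Lemma csum_deriv n (c : nat -> R * R) (Y Y' : nat -> R -> R * R) t :
  (forall j, (j < n)%nat -> derivable_pt_lim (fun s => fst (Y j s)) t (fst (Y' j t)) /\
                            derivable_pt_lim (fun s => snd (Y j s)) t (snd (Y' j t))) ->
  derivable_pt_lim (fun s => fst (csum n (fun j => cmul (c j) (Y j s)))) t (fst (csum n (fun j => cmul (c j) (Y' j t)))) /\
  derivable_pt_lim (fun s => snd (csum n (fun j => cmul (c j) (Y j s)))) t (snd (csum n (fun j => cmul (c j) (Y' j t)))).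
Proof.
  induction n; intros H; simpl; [split; apply derivable_pt_lim_const|].
  destruct IHn as [I1 I2]; [intros; apply H; lia|]. destruct (H n ltac:(lia)) as [D1 D2].
  unfold cadd, cmul; simpl. split.
  - apply (derivable_pt_lim_plus (fun s => fst (csum n (fun j => cmul (c j) (Y j s))))); [exact I1|].
    apply (derivable_pt_lim_minus (fun s => fst (c n) * fst (Y n s)) (fun s => snd (c n) * snd (Y n s)));
      apply dlim_scal; assumption.
  - apply (derivable_pt_lim_plus (fun s => snd (csum n (fun j => cmul (c j) (Y j s))))); [exact I2|].
    apply (derivable_pt_lim_plus (fun s => fst (c n) * snd (Y n s)) (fun s => snd (c n) * fst (Y n s)));
      apply dlim_scal; assumption.
Qed.

Lemma csum_cont n (c : nat -> R * R) (Y : nat -> R -> R * R) t :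
  (forall j, (j < n)%nat -> continuity_pt (fun s => fst (Y j s)) t /\ continuity_pt (fun s => snd (Y j s)) t) ->
  continuity_pt (fun s => fst (csum n (fun j => cmul (c j) (Y j s)))) t /\
  continuity_pt (fun s => snd (csum n (fun j => cmul (c j) (Y j s)))) t.
Proof.
  induction n; intros H; simpl; [split; apply cont_const|].
  destruct IHn as [I1 I2]; [intros; apply H; lia|]. destruct (H n ltac:(lia)) as [D1 D2].
  assert (Hk : forall r (f : R -> R), continuity_pt f t -> continuity_pt (fun s => r * f s) t)
    by (intros r f Hf; apply continuity_pt_mult; [apply cont_const| exact Hf]).
  unfold cadd, cmul; simpl. split.
  - apply (continuity_pt_plus (fun s => fst (csum n (fun j => cmul (c j) (Y j s))))); [exact I1|].
    apply (continuity_pt_minus (fun s => fst (c n) * fst (Y n s)) (fun s => snd (c n) * snd (Y n s))); apply Hk; assumption.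
  - apply (continuity_pt_plus (fun s => snd (csum n (fun j => cmul (c j) (Y j s))))); [exact I2|].
    apply (continuity_pt_plus (fun s => fst (c n) * snd (Y n s)) (fun s => snd (c n) * fst (Y n s))); apply Hk; assumption.
Qed.

Lemma csum_cv n (c : nat -> R * R) (Y : nat -> R -> R * R) (L : nat -> R * R) :
  (forall j, (j < n)%nat -> cv_infty_to (fun s => fst (Y j s)) (fst (L j)) /\ cv_infty_to (fun s => snd (Y j s)) (snd (L j))) ->
  cv_infty_to (fun s => fst (csum n (fun j => cmul (c j) (Y j s)))) (fst (csum n (fun j => cmul (c j) (L j)))) /\
  cv_infty_to (fun s => snd (csum n (fun j => cmul (c j) (Y j s)))) (snd (csum n (fun j => cmul (c j) (L j)))).
Proof.
  induction n; intros H; simpl; [split; apply cv_const|].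
  destruct IHn as [I1 I2]; [intros; apply H; lia|]. destruct (H n ltac:(lia)) as [D1 D2].
  unfold cadd, cmul; simpl. split.
  - apply cv_plus; [exact I1|]. unfold Rminus.
    apply cv_plus; [apply cv_scal; exact D1|].
    apply cv_eq with (-1 * (snd (c n) * snd (L n))); [|ring].
    apply (cv_ext (fun s => -1 * (snd (c n) * snd (Y n s)))); [intros; ring|]. apply cv_scal, cv_scal; exact D2.
  - apply cv_plus; [exact I2|]. apply cv_plus; apply cv_scal; assumption.
Qed.

(* U_k = prod_{l<k} (d/dt - lam_l) X_0, expressed through the derivatives
   X_j = X_0^{(j)} of the chain. *)
Definition chain_signal (lam : nat -> R * R) (X : nat -> R -> R) (k : nat) (t : R) : R * R :=
  csum (S k) (fun j => cmul (prodcoef lam k j) (X j t, 0)).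

(* Algebraic recursion  U_{k+1} = (sum_j c_{kj} X_{j+1}) - lam_k U_k, from
   prod_{l<k+1} (s - lam_l) = s prod_{l<k} (s - lam_l) - lam_k prod_{l<k} (s - lam_l). *)
Lemma chain_signal_rec lam (Y : nat -> R * R) k :
  csum (S (S k)) (fun j => cmul (prodcoef lam (S k) j) (Y j)) =
  cadd (csum (S k) (fun j => cmul (prodcoef lam k j) (Y (S j))))
       (cmul (copp (lam k)) (csum (S k) (fun j => cmul (prodcoef lam k j) (Y j)))).
Proof.
  assert (E1 : csum (S (S k)) (fun j => cmul (prodcoef lam (S k) j) (Y j)) =
     cadd (csum (S (S k)) (fun j => cmul (match j with O => (0,0) | S j' => prodcoef lam k j' end) (Y j)))
          (csum (S (S k)) (fun j => cmul (copp (lam k)) (cmul (prodcoef lam k j) (Y j))))).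
  { rewrite <- csum_cadd. apply csum_ext. intros j _. cbn [prodcoef].
    destruct (match j with O => (0,0) | S j' => prodcoef lam k j' end), (lam k), (prodcoef lam k j), (Y j).
    unfold cadd, cmul, copp; simpl; f_equal; ring. }
  rewrite E1. f_equal.
  - rewrite <- csum_shift. cbn beta iota.
    replace (cmul (0, 0) (Y O)) with ((0:R), (0:R)) by (destruct (Y O); unfold cmul; simpl; f_equal; ring).
    destruct (csum (S k) (fun j => cmul (prodcoef lam k j) (Y (S j)))); unfold cadd; simpl; f_equal; ring.
  - rewrite csum_cmul. f_equal.
    change (csum (S (S k)) ?f) with (cadd (csum (S k) f) (f (S k))). cbv beta.
    rewrite (prodcoef_zero lam k (S k)) by lia.
    destruct (csum (S k) (fun j => cmul (prodcoef lam k j) (Y j))), (Y (S k)); unfold cadd, cmul; simpl; f_equal; ring.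
Qed.

Section Chain.
Variables (ts : nat -> R) (tauD : R) (d : nat) (lam : nat -> R * R) (X : nat -> R -> R).
Hypotheses (Hd : dwell_times ts tauD) (Hlam : forall j, (j < d)%nat -> fst (lam j) < 0)
  (Hc : forall c t, (c <= d)%nat -> continuity_pt (X c) t)
  (Hder : forall c t, (c < d)%nat -> on_piece ts t -> derivable_pt_lim (X c) t (X (S c) t)).

Lemma chain_signal_cont k t : (k <= d)%nat ->
  continuity_pt (fun s => fst (chain_signal lam X k s)) t /\ continuity_pt (fun s => snd (chain_signal lam X k s)) t.
Proof.
  intros Hk. apply (csum_cont (S k) (prodcoef lam k) (fun j s => (X j s, 0))).
  intros j Hj. simpl. split; [apply Hc; lia| apply cont_const].
Qed.

(* The chain signals obey the first-order equations  U_k' = lam_k U_k + U_{k+1}. *)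
Lemma chain_signal_ode k t : (k < d)%nat -> on_piece ts t ->
  let U := chain_signal lam X k in let U' := chain_signal lam X (S k) in
  derivable_pt_lim (fun s => fst (U s)) t (fst (lam k) * fst (U t) - snd (lam k) * snd (U t) + fst (U' t)) /\
  derivable_pt_lim (fun s => snd (U s)) t (snd (lam k) * fst (U t) + fst (lam k) * snd (U t) + snd (U' t)).
Proof.
  intros Hk Hp U U'.
  destruct (csum_deriv (S k) (prodcoef lam k) (fun j s => (X j s, 0)) (fun j s => (X (S j) s, 0)) t) as [D1 D2].
  { intros j Hj. simpl. split; [apply Hder; [lia| exact Hp]| apply derivable_pt_lim_const]. }
  set (DU := csum (S k) (fun j => cmul (prodcoef lam k j) (X (S j) t, 0))) in *.
  assert (E : U' t = cadd DU (cmul (copp (lam k)) (U t))) by exact (chain_signal_rec lam (fun j => (X j t, 0)) k).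
  rewrite E.
  replace (fst (lam k) * fst (U t) - snd (lam k) * snd (U t) + fst (cadd DU (cmul (copp (lam k)) (U t)))) with (fst DU)
    by (destruct DU, (U t), (lam k); unfold cadd, cmul, copp; simpl; ring).
  replace (snd (lam k) * fst (U t) + fst (lam k) * snd (U t) + snd (cadd DU (cmul (copp (lam k)) (U t)))) with (snd DU)
    by (destruct DU, (U t), (lam k); unfold cadd, cmul, copp; simpl; ring).
  split; assumption.
Qed.

(* Convergence of the top signal U_d propagates down to every U_k, each step
   being a stable first-order equation with convergent input. *)
Lemma chain_signals_converge :
  (exists Ld : R * R, cv_infty_to (fun t => fst (chain_signal lam X d t)) (fst Ld) /\
              cv_infty_to (fun t => snd (chain_signal lam X d t)) (snd Ld)) ->
  forall k, (k <= d)%nat -> exists Lk : R * R,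
    cv_infty_to (fun t => fst (chain_signal lam X k t)) (fst Lk) /\
    cv_infty_to (fun t => snd (chain_signal lam X k t)) (snd Lk).
Proof.
  intros HUd.
  assert (H : forall r k, (k + r = d)%nat -> exists Lk : R * R,
    cv_infty_to (fun t => fst (chain_signal lam X k t)) (fst Lk) /\
    cv_infty_to (fun t => snd (chain_signal lam X k t)) (snd Lk)).
  { induction r; intros k Hk; [replace k with d by lia; exact HUd|].
    destruct (IHr (S k) ltac:(lia)) as [L1 [HL1 HL2]].
    destruct (stable_first_order ts tauD (fun t => fst (chain_signal lam X k t)) (fun t => snd (chain_signal lam X k t))
      (fun t => fst (chain_signal lam X (S k) t)) (fun t => snd (chain_signal lam X (S k) t))
      (fst (lam k)) (snd (lam k)) (fst L1) (snd L1) Hd (Hlam k ltac:(lia))) as [p [q [Hp Hq]]];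
      [intros t; apply (chain_signal_cont k t); lia| intros t; apply (chain_signal_cont k t); lia|
       intros t Hpc; apply (chain_signal_ode k t); [lia| exact Hpc]| exact HL1| exact HL2|].
    exists (p, q). split; assumption. }
  intros k Hk. apply (H (d - k)%nat k). lia.
Qed.

(* Once all U_k converge, so do X_0, ..., X_d, by induction: U_c is X_c plus a
   combination of X_0, ..., X_{c-1} (the product is monic). *)
Lemma chain_converges :
  (forall k, (k <= d)%nat -> exists Lk : R * R, cv_infty_to (fun t => fst (chain_signal lam X k t)) (fst Lk)) ->
  forall c, (c <= d)%nat -> exists L, cv_infty_to (X c) L.
Proof.
  intros HU.
  assert (HX : forall c, (c <= d)%nat -> exists Lf : nat -> R, forall j, (j <= c)%nat -> cv_infty_to (X j) (Lf j)).
  { induction c; intros Hcd.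
    - destruct (HU O ltac:(lia)) as [L0 H0].
      exists (fun _ => fst L0). intros j Hj. replace j with O by lia.
      apply (cv_ext (fun t => fst (chain_signal lam X 0 t))); [|exact H0].
      intros t. unfold chain_signal; simpl. unfold cadd, cmul; simpl. ring.
    - destruct (IHc ltac:(lia)) as [Lf HLf].
      destruct (HU (S c) Hcd) as [Lc H1].
      destruct (csum_cv (S c) (prodcoef lam (S c)) (fun j s => (X j s, 0)) (fun j => (Lf j, 0))) as [C1 _].
      { intros j Hj. simpl. split; [apply HLf; lia| apply cv_const]. }
      set (Lnew := fst Lc - fst (csum (S c) (fun j => cmul (prodcoef lam (S c) j) (Lf j, 0)))).
      exists (fun j => if Nat.leb j c then Lf j else Lnew). intros j Hj.
      destruct (Nat.leb_spec j c) as [Hjc|Hjc]; [apply HLf; exact Hjc|].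
      replace j with (S c) by lia.
      apply (cv_ext (fun t => fst (chain_signal lam X (S c) t) + -1 * fst (csum (S c) (fun j => cmul (prodcoef lam (S c) j) (X j t, 0))))).
      + intros t. unfold chain_signal. change (csum (S (S c)) ?f) with (cadd (csum (S c) f) (f (S c))). cbv beta.
        rewrite prodcoef_lead. unfold cadd, cmul; simpl. ring.
      + apply cv_eq with (fst Lc + -1 * fst (csum (S c) (fun j => cmul (prodcoef lam (S c) j) (Lf j, 0)))).
        * apply cv_plus; [exact H1| apply cv_scal; exact C1].
        * unfold Lnew; ring. }
  intros c Hc'. destruct (HX c Hc') as [Lf H]. exists (Lf c). apply H; lia.
Qed.

End Chain.

(** * The multi-agent system *)

Lemma K2_chain_signal d a lam (X : nat -> R -> R) t :
  (forall i, (i <= d)%nat -> prodcoef lam d i = if Nat.eqb i d then (1, 0) else (a (S i), 0)) ->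
  chain_signal lam X d t = (rsum (S d) (fun c => K2 (S d) a c * X c t), 0).
Proof.
  intros Hcf. unfold chain_signal.
  rewrite (csum_ext (S d) _ (fun j => cmul (K2 (S d) a j, 0) (X j t, 0))); [apply csum_real|].
  intros j Hj. rewrite Hcf by lia. unfold K2. replace (S d - 1)%nat with d by lia. destruct (Nat.eqb j d); reflexivity.
Qed.

(* All components converge by the factorization
   argument; the derivative of a convergent component converges, hence to 0. *)
Lemma integrator_chain_limit ts tauD d a (X : nat -> R -> R) zs :
  dwell_times ts tauD -> (1 <= d)%nat -> hurwitz (S d) a ->
  (forall c t, (c <= d)%nat -> continuity_pt (X c) t) ->
  (forall c t, (c < d)%nat -> on_piece ts t -> derivable_pt_lim (X c) t (X (S c) t)) ->
  cv_infty_to (fun t => rsum (S d) (fun c => K2 (S d) a c * X c t)) zs ->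
  forall c, (c <= d)%nat -> cv_infty_to (X c) (if Nat.eqb c 0 then zs / a 1%nat else 0).
Proof.
  intros Hd Hd1 Hhur Hc Hder Hz.
  destruct (Factorization.factorization d a) as [lam [Hroot Hcf]].
  assert (Hlam : forall j, (j < d)%nat -> fst (lam j) < 0) by (intros j Hj; apply Hhur, Hroot; exact Hj).
  assert (Htop : forall t, chain_signal lam X d t = (rsum (S d) (fun c => K2 (S d) a c * X c t), 0))
    by (intros t; apply K2_chain_signal; exact Hcf).
  assert (HX : forall c, (c <= d)%nat -> exists L, cv_infty_to (X c) L).
  { apply (chain_converges d lam X). intros k Hk.
    destruct (chain_signals_converge ts tauD d lam X Hd Hlam Hc Hder) with (k := k) as [Lk [H _]]; [|exact Hk|].
    - exists (zs, 0). split.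
      + apply (cv_ext (fun t => rsum (S d) (fun c => K2 (S d) a c * X c t))); [intros t; rewrite Htop; reflexivity| exact Hz].
      + apply (cv_ext (fun _ => 0)); [intros t; rewrite Htop; reflexivity| apply cv_const].
    - exists Lk. exact H. }
  assert (Hzero : forall c, (1 <= c)%nat -> (c <= d)%nat -> cv_infty_to (X c) 0).
  { intros c H1 H2. destruct (HX c H2) as [L HL]. destruct (HX (c - 1)%nat ltac:(lia)) as [L' HL'].
    replace 0 with L; [exact HL|].
    apply (derivative_limit_zero ts tauD (X (c - 1)%nat) (X c) L' L Hd); [intros t; apply Hc; lia| |exact HL'| exact HL].
    intros t Hp. replace c with (S (c - 1)) at 2 by lia. apply Hder; [lia| exact Hp]. }
  destruct (HX O ltac:(lia)) as [L0 HL0].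
  assert (HzL : cv_infty_to (fun t => rsum (S d) (fun c => K2 (S d) a c * X c t)) (a 1%nat * L0)).
  { apply (cv_ext (fun t => K2 (S d) a O * X O t + rsum d (fun c => K2 (S d) a (S c) * X (S c) t)));
      [intros t; rewrite rsum_shift; reflexivity|].
    apply cv_eq with (K2 (S d) a O * L0 + 0).
    - apply cv_plus; [apply cv_scal; exact HL0|].
      apply (rsum_cv0 d (fun c t => K2 (S d) a (S c) * X (S c) t)). intros c Hc'.
      apply cv_eq with (K2 (S d) a (S c) * 0); [|ring]. apply cv_scal, Hzero; lia.
    - unfold K2. replace (S d - 1)%nat with d by lia.
      replace (Nat.eqb 0 d) with false by (symmetry; apply Nat.eqb_neq; lia). ring. }
  assert (Hzs : zs = a 1%nat * L0) by exact (cv_unique _ _ _ Hz HzL).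
  intros [|c] Hc'; simpl.
  - apply cv_eq with L0; [exact HL0|]. rewrite Hzs. field. exact (hurwitz_a1 d a Hd1 Hhur).
  - apply Hzero; lia.
Qed.

(* Since K1 cancels the chain terms of K2, the K2-combination of the protocol
   reduces to pure consensus on the K2-combinations of the neighbours. *)
Lemma K2_protocol_identity N d a alpha sigma (x : nat -> R -> nat -> R) i t :
  rsum (S d) (fun c => K2 (S d) a c *
     (if Nat.eqb c (S d - 1) then protocol N (S d) a alpha sigma x i t else x i t (S c)))
  = rsum N (fun j => alpha (sigma t) i j *
       (rsum (S d) (fun c => K2 (S d) a c * x j t c) - rsum (S d) (fun c => K2 (S d) a c * x i t c))).
Proof.
  replace (S d - 1)%nat with d by lia.
  change (rsum (S d) ?f) with (rsum d f + f d) at 1. cbv beta.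
  rewrite Nat.eqb_refl.
  rewrite (rsum_ext d _ (fun c => a (S c) * x i t (S c))).
  2:{ intros c Hc. assert (Hcd : Nat.eqb c d = false) by (apply Nat.eqb_neq; lia). rewrite Hcd.
      unfold K2. replace (S d - 1)%nat with d by lia. rewrite Hcd. reflexivity. }
  unfold K2 at 1. replace (S d - 1)%nat with d by lia. rewrite Nat.eqb_refl.
  unfold protocol. rewrite rsum_shift. unfold K1 at 1.
  rewrite (rsum_ext d (fun c => K1 a (S c) * x i t (S c)) (fun c => - (a (S c) * x i t (S c)))) by (intros; unfold K1; ring).
  rewrite rsum_opp.
  rewrite (rsum_ext N (fun j => alpha (sigma t) i j * rsum (S d) (fun c => K2 (S d) a c * (x i t c - x j t c)))
     (fun j => - (alpha (sigma t) i j * (rsum (S d) (fun c => K2 (S d) a c * x j t c) - rsum (S d) (fun c => K2 (S d) a c * x i t c))))).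
  - rewrite rsum_opp. ring.
  - intros j _. rewrite (rsum_ext (S d) (fun c => K2 (S d) a c * (x i t c - x j t c))
        (fun c => K2 (S d) a c * x i t c + (-1) * (K2 (S d) a c * x j t c))) by (intros; ring).
    rewrite rsum_plus, rsum_scal. ring.
Qed.

Section Switching.
Variables (N nS : nat) (alpha : nat -> nat -> nat -> R) (sigma : R -> nat).
Hypotheses (halpha_nonneg : forall k i j, (k < nS)%nat -> 0 <= alpha k i j)
  (hsigma : forall t, (sigma t < nS)%nat).

Let w (t : R) (i j : nat) : R := alpha (sigma t) i j.

Lemma switching_weights_bounded :
  weights_bounded N w (rsum nS (fun k => rsum N (fun i => rsum N (fun j => alpha k i j)))).
Proof.
  intros t i j Hi Hj. unfold w. pose proof (hsigma t) as Hk. split; [apply halpha_nonneg; exact Hk|].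
  set (k := sigma t) in *.
  apply Rle_trans with (rsum N (fun j => alpha k i j));
    [apply (rsum_ge_term N (fun j => alpha k i j)); [intros; apply halpha_nonneg; exact Hk| exact Hj]|].
  apply Rle_trans with (rsum N (fun i => rsum N (fun j => alpha k i j))).
  { apply (rsum_ge_term N (fun i => rsum N (fun j => alpha k i j))); [|exact Hi].
    intros; apply rsum_nonneg; intros; apply halpha_nonneg; exact Hk. }
  apply (rsum_ge_term nS (fun k => rsum N (fun i => rsum N (fun j => alpha k i j)))); [|exact Hk].
  intros k' Hk'. apply rsum_nonneg; intros; apply rsum_nonneg; intros; apply halpha_nonneg; exact Hk'.
Qed.

Lemma finite_uniform_pos n (g : nat -> R -> Prop) :
  (forall k, (k < n)%nat -> exists d, 0 < d /\ g k d) ->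
  (forall k d d', g k d -> 0 < d' -> d' <= d -> g k d') ->
  exists d, 0 < d /\ forall k, (k < n)%nat -> g k d.
Proof.
  intros H Hm. induction n; [exists 1; split; [lra| intros; lia]|].
  destruct IHn as [d1 [Hd1 H1]]; [intros; apply H; lia|].
  destruct (H n ltac:(lia)) as [d2 [Hd2 H2]].
  exists (Rmin d1 d2). split; [apply Rmin_glb_lt; lra|]. intros k Hk.
  destruct (Nat.eq_dec k n) as [->|Hne].
  - apply (Hm n d2); [exact H2| apply Rmin_glb_lt; lra| apply Rmin_r].
  - apply (Hm k d1); [apply H1; lia| apply Rmin_glb_lt; lra| apply Rmin_l].
Qed.

(* Finitely many graphs: the positive weights are bounded away from 0. *)
Lemma switching_weights_lower : exists delta, 0 < delta /\ weights_lower N w delta.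
Proof.
  destruct (finite_uniform_pos nS (fun k d => forall i j, (i < N)%nat -> (j < N)%nat -> 0 < alpha k i j -> d <= alpha k i j))
    as [delta [Hdel Hdk]].
  - intros k Hk.
    destruct (finite_uniform_pos N (fun i d => forall j, (j < N)%nat -> 0 < alpha k i j -> d <= alpha k i j)) as [d0 [Hd0 H0]].
    + intros i Hi.
      destruct (finite_uniform_pos N (fun j d => 0 < alpha k i j -> d <= alpha k i j)) as [d1 [Hd1 H1]].
      * intros j _. destruct (Rlt_dec 0 (alpha k i j)) as [Hp|Hp]; [exists (alpha k i j)| exists 1]; split; lra.
      * intros j d d' Hj Hd' Hle Hp. specialize (Hj Hp). lra.
      * exists d1. split; [exact Hd1| exact H1].
    + intros i d1 d2 H Hd2 Hle j Hj Hp. specialize (H j Hj Hp). lra.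
    + exists d0. split; [exact Hd0|]. intros i j Hi Hj Hp. apply H0; assumption.
  - intros k d1 d2 H Hd2 Hle i j Hi Hj Hp. specialize (H i j Hi Hj Hp). lra.
  - exists delta. split; [exact Hdel|]. intros t i j Hi Hj Hp. apply (Hdk (sigma t) (hsigma t)); assumption.
Qed.

Variables (ts : nat -> R) (tauD : R).
Hypothesis hdwell : dwell_switching sigma ts tauD.

Lemma switching_dwell_times : dwell_times ts tauD.
Proof. destruct hdwell as [H1 [H2 [H3 _]]]. split; [exact H1| split; assumption]. Qed.

Lemma switching_weights_dwell : weights_dwell w (tauD / 2).
Proof.
  destruct hdwell as [HtauD [_ [Hstep Hconst]]].
  intros s Hs. destruct (dwell_times_locate ts tauD switching_dwell_times s Hs) as [n Hn].
  destruct (Rle_dec (tauD / 2) (s - ts n)) as [Hle|Hgt].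
  - exists (s - tauD / 2). split; [lra|]. intros u i j Hu. unfold w.
    rewrite (Hconst n u), (Hconst n s) by lra. reflexivity.
  - exists s. split; [lra|]. intros u i j Hu. unfold w. specialize (Hstep n).
    rewrite (Hconst n u), (Hconst n s) by lra. reflexivity.
Qed.

Lemma switching_rooted_windows : ujqsc N alpha sigma -> exists T, 0 < T /\ rooted_windows N w T.
Proof. intros [T [HT Hc]]. exists T. split; [lra|]. intros t Ht. exact (Hc t ltac:(lra)). Qed.

Lemma K2_consensus d a (x : nat -> R -> nat -> R) :
  (forall i c t, (i < N)%nat -> (c < S d)%nat -> continuity_pt (fun s => x i s c) t) ->
  (forall n i c t, (i < N)%nat -> (c < S d)%nat -> ts n < t < ts (S n) ->
     derivable_pt_lim (fun s => x i s c) t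
       (if Nat.eqb c (S d - 1) then protocol N (S d) a alpha sigma x i t else x i t (S c))) ->
  consensus_solution ts N w (fun i t => rsum (S d) (fun c => K2 (S d) a c * x i t c)).
Proof.
  intros hcont hode. split.
  - intros i t Hi. apply (rsum_cont (S d) (fun c s => K2 (S d) a c * x i s c)).
    intros c Hc. apply continuity_pt_mult; [apply cont_const| apply hcont; assumption].
  - intros i t Hi [n Hn]. unfold w. rewrite <- (K2_protocol_identity N d a alpha sigma x i t).
    apply (rsum_deriv (S d) (fun c s => K2 (S d) a c * x i s c)
      (fun c s => K2 (S d) a c * (if Nat.eqb c (S d - 1) then protocol N (S d) a alpha sigma x i s else x i s (S c)))).
    intros c Hc.
    apply dlim_scal. apply (hode n); assumption.
Qed.

End Switching.

Theorem theorem1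
  (N m : nat) (hN : (1 <= N)%nat) (hm : (2 <= m)%nat)
  (a : nat -> R)
  (nS : nat) (alpha : nat -> nat -> nat -> R)
  (halpha_nonneg : forall k i j, (k < nS)%nat -> 0 <= alpha k i j)
  (halpha_noself : forall k i, (k < nS)%nat -> alpha k i i = 0)
  (sigma : R -> nat) (hsigma : forall t, (sigma t < nS)%nat)
  (ts : nat -> R) (tauD : R) (hdwell : dwell_switching sigma ts tauD)
  (hhur : hurwitz m a)
  (hconn : ujqsc N alpha sigma)
  (x : nat -> R -> nat -> R)
  (hcont : forall i c t, (i < N)%nat -> (c < m)%nat ->
           continuity_pt (fun s => x i s c) t)
  (hode : forall n i c t, (i < N)%nat -> (c < m)%nat -> ts n < t < ts (S n) ->
           derivable_pt_lim (fun s => x i s c) t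
             (if Nat.eqb c (m - 1) then protocol N m a alpha sigma x i t
              else x i t (S c))) :
  exists xbar : R, forall i c, (i < N)%nat -> (c < m)%nat ->
    cv_infty_to (fun t => x i t c) (if Nat.eqb c 0 then xbar / a 1%nat else 0).
Proof.
  destruct m as [|d]; [lia|].
  pose proof (switching_dwell_times sigma ts tauD hdwell) as Hd.
  destruct (switching_weights_lower N nS alpha sigma hsigma) as [delta [Hdel Hlow]].
  destruct (switching_rooted_windows N alpha sigma hconn) as [T [HT Hroot]].
  destruct (consensus_convergence ts tauD N _ _ delta (tauD / 2) T Hd hN
    (switching_weights_bounded N nS alpha sigma halpha_nonneg hsigma) Hlow Hdel
    (switching_weights_dwell alpha sigma ts tauD hdwell) ltac:(destruct hdwell; lra) HT Hroot
    _ (K2_consensus N alpha sigma ts d a x hcont hode)) as [zs Hzs].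
  exists zs. intros i c Hi Hc.
  apply (integrator_chain_limit ts tauD d a (fun c t => x i t c) zs Hd ltac:(lia) hhur); [| | exact (Hzs i Hi)| lia].
  - intros c' t Hc'. apply hcont; [exact Hi| lia].
  - intros c' t Hc' [n Hn]. pose proof (hode n i c' t Hi ltac:(lia) Hn) as H.
    replace (Nat.eqb c' (S d - 1)) with false in H by (symmetry; apply Nat.eqb_neq; lia). exact H.
Qed.
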